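(* Let $T>0$ and let $\omega\in\mathbf{R}$, $\omega\neq 0$, be such that $e^{2i\omega T}\neq 1$. Then for any $a\in H^1$ and $g\in H^2$ there exists a unique solution $u\in\mathcal{W}^1_\infty$ of the boundary value problem $$\frac{d^2u}{dt^2}(t)=Au(t),\ t\in(0,T),\qquad u(0)=a,\qquad \int_0^T e^{i\omega t}u(t)\,dt=g .$$ Moreover, there exists $c>0$ depending only on $A$ (together with its boundary conditions, i.e. the eigen-system $\{\lambda_k,v_k\}$), $T$ and $\omega$ such that $$\|u\|_{\mathcal{W}^1_\infty}\le c\left(\|a\|_{H^1}+\|g\|_{H^2}\right)\qquad\forall a\in H^1,\ g\in H^2 .$$
   Context: Let $\mathrm{D}\subset\mathbf{R}^n$ be a domain and $H=L_2(\mathrm{D};\mathbf{C})$ (complex-valued square integrable functions) with inner product $(\cdot,\cdot)_H$. $A$ is a self-adjoint operator on $H$ (with boundary conditions encoded by a dense subset $H_{BC}\subset H$) mapping real-valued functions to real-valued functions, and there is an orthonormal basis $\{v_k\}_{k\ge1}$ of $H$ consisting of eigenfunctions, $Av_k=-\lambda_k v_k$, with $\lambda_k\in(0,+\infty)$ and $\lambda_k\to+\infty$. For $q=-1,0,1,2$, $H^q$ is the completion (closure of $H_{BC}\cap D(A)$) with respect to the norm $\|u\|_{H^q}=\big(\sum_{k\ge1}\lambda_k^q|(u,v_k)_H|^2\big)^{1/2}$; $H^0=H$. For $r\in[1,\infty]$, $\mathcal{C}^q=C([0,T];H^q)$, $\mathcal{L}^q_r=L_r([0,T];H^q)$ (Lebesgue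 measure), and $\mathcal{W}^1_r=\{u\in\mathcal{C}^0\cap\mathcal{L}^1_r:\ du/dt\in\mathcal{C}^0\}$ with norm $\|u\|_{\mathcal{W}^1_r}=\|u\|_{\mathcal{C}^0}+\|u\|_{\mathcal{L}^1_r}+\|du/dt\|_{\mathcal{C}^0}$. A function $u\in\mathcal{W}^1_1$ is said to satisfy $\frac{d^2u}{dt^2}=Au$ if $\frac{du}{dt}(t)-\frac{du}{dt}(s)=\int_s^tAu(r)\,dr$ holds in $H^{-1}$ for all $0\le s\le t\le T$; the conditions $u(0)=a$ and $\int_0^Te^{i\omega t}u(t)dt=g$ are required as equalities in $H$. *)

From Stdlib Require Import Reals Lra ClassicalEpsilon.
Open Scope R_scope.

Record Cplx := mkC { Cre : R ; Cim : R }.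
Definition Cadd (z w : Cplx) : Cplx := mkC (Cre z + Cre w) (Cim z + Cim w).
Definition Csub (z w : Cplx) : Cplx := mkC (Cre z - Cre w) (Cim z - Cim w).
Definition Cmul (z w : Cplx) : Cplx :=
  mkC (Cre z * Cre w - Cim z * Cim w) (Cre z * Cim w + Cim z * Cre w).
Definition CscaleR (r : R) (z : Cplx) : Cplx := mkC (r * Cre z) (r * Cim z).
Definition Cone : Cplx := mkC 1 0.
Definition Cmod2 (z : Cplx) : R := Cre z ^ 2 + Cim z ^ 2.
Definition Cexpi (theta : R) : Cplx := mkC (cos theta) (sin theta).

(* ---------- the abstract spectral setting ----------
   An element u of H (or of H^{-1}, H^1, H^2) is represented by its sequence of
   Fourier coefficients k |-> (u, v_{k+1})_H  (index shifted: k : nat starts at 0).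
   lam k is the eigenvalue lambda_{k+1}. *)
Definition Hseq := nat -> Cplx.

Definition seq_sub (x y : Hseq) : Hseq := fun k => Csub (x k) (y k).
Definition seq_scale (r : R) (x : Hseq) : Hseq := fun k => CscaleR r (x k).

Definition Hq_terms (lam : nat -> R) (q : Z) (x : Hseq) : nat -> R :=
  fun k => powerRZ (lam k) q * Cmod2 (x k).

Definition inHq (lam : nat -> R) (q : Z) (x : Hseq) : Prop :=
  exists l, infinite_sum (Hq_terms lam q x) l.

(* ||x||_{H^q} = sqrt (sum_k lambda_k^q |x_k|^2)  (meaningful when inHq holds) *)
Definition Hnorm (lam : nat -> R) (q : Z) (x : Hseq) : R :=
  sqrt (epsilon (inhabits 0) (fun l => infinite_sum (Hq_terms lam q x) l)).

Definition cont_Hq (lam : nat -> R) (q : Z) (T : R) (u : R -> Hseq) : Prop :=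
  (forall t, 0 <= t <= T -> inHq lam q (u t)) /\
  (forall t, 0 <= t <= T -> forall eps, 0 < eps ->
     exists delta, 0 < delta /\
       forall s, 0 <= s <= T -> Rabs (s - t) < delta ->
         Hnorm lam q (seq_sub (u s) (u t)) < eps).

Definition deriv_H (lam : nat -> R) (T : R) (u v : R -> Hseq) : Prop :=
  forall t, 0 <= t <= T -> forall eps, 0 < eps ->
    exists delta, 0 < delta /\
      forall s, 0 <= s <= T -> s <> t -> Rabs (s - t) < delta ->
        Hnorm lam 0 (seq_sub (seq_scale (/ (s - t)) (seq_sub (u s) (u t))) (v t))
          < eps.

(* u belongs to W^1_infty with du/dt = v:
   u in C([0,T];H), u in L_infty([0,T];H^1), du/dt = v in C([0,T];H).
   (For u continuous into H, membership in L_infty(H^1) amounts to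
   u(t) in H^1 for all t with sup_t ||u(t)||_{H^1} < infinity.) *)
Definition inW1inf (lam : nat -> R) (T : R) (u v : R -> Hseq) : Prop :=
  cont_Hq lam 0 T u /\
  (forall t, 0 <= t <= T -> inHq lam 1 (u t)) /\
  (exists M, forall t, 0 <= t <= T -> Hnorm lam 1 (u t) <= M) /\
  deriv_H lam T u v /\
  cont_Hq lam 0 T v.

Definition RInt_eq (f : R -> R) (a b l : R) : Prop :=
  exists pr : Riemann_integrable f a b, RiemannInt pr = l.

Definition CInt_eq (f : R -> Cplx) (a b : R) (z : Cplx) : Prop :=
  RInt_eq (fun r => Cre (f r)) a b (Cre z) /\
  RInt_eq (fun r => Cim (f r)) a b (Cim z).

(* d^2u/dt^2 = Au in the integrated sense, in H^{-1}:
   du/dt(t) - du/dt(s) = int_s^t A u(r) dr, written coefficientwise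
   (A acts by (Au)_k = - lambda_k u_k). *)
Definition wave_eq (lam : nat -> R) (T : R) (u v : R -> Hseq) : Prop :=
  forall s t, 0 <= s -> s <= t -> t <= T -> forall k,
    CInt_eq (fun r => CscaleR (- lam k) (u r k)) s t (Csub (v t k) (v s k)).

Definition bc_init (u : R -> Hseq) (a : Hseq) : Prop := forall k, u 0 k = a k.
Definition bc_int (omega T : R) (u : R -> Hseq) (g : Hseq) : Prop :=
  forall k, CInt_eq (fun t => Cmul (Cexpi (omega * t)) (u t k)) 0 T (g k).

Definition is_solution (lam : nat -> R) (T omega : R) (a g : Hseq)
  (u v : R -> Hseq) : Prop :=
  inW1inf lam T u v /\ wave_eq lam T u v /\ bc_init u a /\ bc_int omega T u g.

(* Everything is computed in the eigenbasis: the k-th coefficient of a solution satisfies the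
   scalar equation x'' = -lam_k x, so it equals a_k cos(mu_k t) + b_k sin(mu_k t), mu_k = sqrt lam_k.
   The integral condition becomes a_k P(mu_k) + b_k Q(mu_k) = g_k, where
   P(mu) = int_0^T e^{i om t} cos(mu t) dt and Q(mu) = int_0^T e^{i om t} sin(mu t) dt.
   Non-resonance, e^{2 i om T} <> 1, means sin(om T) <> 0; then Q(mu) <> 0 for every mu > 0, and
   for large mu the closed forms give |Q(mu)| >~ |sin(om T)| / mu and |P(mu)| <~ 1 / mu.  Hence
   b_k = (g_k - a_k P(mu_k)) / Q(mu_k) is well defined and lam_k |b_k|^2 <= K (lam_k |a_k|^2 +
   lam_k^2 |g_k|^2) uniformly in k. *)

From Coquelicot Require Import Coquelicot.
From Stdlib Require Import Reals Lra Lia Psatz ClassicalEpsilon FunctionalExtensionality.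
Open Scope R_scope.

Lemma Hnorm_eq lam q x l :
  infinite_sum (Hq_terms lam q x) l -> Hnorm lam q x = sqrt l.
Proof.
  intro Hl. unfold Hnorm. f_equal.
  apply (uniqueness_sum (Hq_terms lam q x)); [|exact Hl].
  exact (epsilon_spec (inhabits 0) (fun l => infinite_sum (Hq_terms lam q x) l)
           (ex_intro _ l Hl)).
Qed.

Lemma Hq_terms_0 lam x : Hq_terms lam 0 x = fun k => Cmod2 (x k).
Proof. apply functional_extensionality; intro k. unfold Hq_terms. simpl. ring. Qed.
Lemma Hq_terms_1 lam x : Hq_terms lam 1 x = fun k => lam k * Cmod2 (x k).
Proof. apply functional_extensionality; intro k. unfold Hq_terms. simpl. ring. Qed.
Lemma Hq_terms_2 lam x : Hq_terms lam 2 x = fun k => lam k ^ 2 * Cmod2 (x k).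
Proof. apply functional_extensionality; intro k. unfold Hq_terms. simpl. ring. Qed.

Lemma series_plus a b la lb : infinite_sum a la -> infinite_sum b lb ->
  infinite_sum (fun k => a k + b k) (la + lb).
Proof.
  intros Ha Hb. apply is_series_Reals.
  apply (is_series_plus a b la lb); apply is_series_Reals; assumption.
Qed.

Lemma series_scal r a la : infinite_sum a la -> infinite_sum (fun k => r * a k) (r * la).
Proof.
  intros Ha. apply is_series_Reals.
  apply (is_series_scal r a la); apply is_series_Reals; assumption.
Qed.

Lemma series_nonneg c l : (forall k, 0 <= c k) -> infinite_sum c l -> 0 <= l.
Proof. intros Hc Hl. exact (Rle_trans _ _ _ (Hc 0%nat) (sum_incr c 0 l Hl Hc)). Qed.

Lemma series_comparison (c B : nat -> R) L :
  (forall k, 0 <= c k <= B k) -> infinite_sum B L ->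
  exists l, infinite_sum c l /\ l <= L.
Proof.
  intros Hc HB.
  destruct (Rseries_CV_comp c B Hc (exist _ L HB)) as [l Hl].
  exists l. split; [exact Hl|].
  eapply Rle_cv_lim; [|exact Hl|exact HB].
  intro n. apply sum_Rle. intros; apply Hc.
Qed.

Lemma term_le_series c l k : (forall n, 0 <= c n) -> infinite_sum c l -> c k <= l.
Proof.
  intros Hc Hl. apply Rle_trans with (sum_f_R0 c k); [|exact (sum_incr c k l Hl Hc)].
  destruct k; simpl; [lra|]. pose proof (cond_pos_sum c k Hc). lra.
Qed.

Lemma partial_sum_small (c : R -> nat -> R) t (D : R -> Prop) :
  (forall k eps, 0 < eps -> exists delta, 0 < delta /\
     forall s, D s -> Rabs (s - t) < delta -> c s k < eps) ->
  forall n eps, 0 < eps -> exists delta, 0 < delta /\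
     forall s, D s -> Rabs (s - t) < delta -> sum_f_R0 (c s) n < eps.
Proof.
  intros Hc n. induction n as [|n IH]; intros eps He; [exact (Hc 0%nat eps He)|].
  destruct (IH (eps/2)) as [d1 [Hd1 H1]]; [lra|].
  destruct (Hc (S n) (eps/2)) as [d2 [Hd2 H2]]; [lra|].
  exists (Rmin d1 d2). split; [apply Rmin_pos; auto|].
  intros s Hs Hst. simpl.
  pose proof (H1 s Hs (Rlt_le_trans _ _ _ Hst (Rmin_l d1 d2))).
  pose proof (H2 s Hs (Rlt_le_trans _ _ _ Hst (Rmin_r d1 d2))). lra.
Qed.

Lemma dominated_series_small (c : R -> nat -> R) (B : nat -> R) L t (D : R -> Prop) :
  (forall s k, D s -> 0 <= c s k <= B k) -> infinite_sum B L ->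
  (forall k eps, 0 < eps -> exists delta, 0 < delta /\
     forall s, D s -> Rabs (s - t) < delta -> c s k < eps) ->
  forall eps, 0 < eps -> exists delta, 0 < delta /\
     forall s, D s -> Rabs (s - t) < delta -> forall l, infinite_sum (c s) l -> l < eps.
Proof.
  intros Hc HB Hpt eps He.
  destruct (HB (eps/2)) as [N HN]; [lra|].
  specialize (HN N (le_n N)). unfold R_dist in HN. apply Rabs_def2 in HN as [_ HN].
  destruct (partial_sum_small c t D Hpt N (eps/2)) as [d [Hd Hsmall]]; [lra|].
  exists d. split; [exact Hd|]. intros s Hs Hst l Hl.
  (* the tail of c s is dominated by the tail of B *)
  pose proof (sum_maj1 (fun k s => c s k) B s l L N Hl HB) as Htail.
  assert (Habs : forall k, Rabs (c s k) <= B k).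
  { intro k. destruct (Hc s k Hs). rewrite Rabs_right; lra. }
  specialize (Htail Habs). unfold SP in Htail. change (fun k => c s k) with (c s) in Htail.
  pose proof (Rle_abs (l - sum_f_R0 (c s) N)). pose proof (Hsmall s Hs Hst). lra.
Qed.

Lemma Cplx_ext z w : Cre z = Cre w -> Cim z = Cim w -> z = w.
Proof. destruct z, w; cbn; intros -> ->; reflexivity. Qed.

Lemma Cmod2_ge0 z : 0 <= Cmod2 z.
Proof. unfold Cmod2. nra. Qed.

Lemma Cmod2_sub z w : Cmod2 (Csub z w) <= 2 * Cmod2 z + 2 * Cmod2 w.
Proof.
  destruct z as [a b], w as [c d]; unfold Cmod2, Csub; cbn [Cre Cim].
  pose proof (pow2_ge_0 (a + c)); pose proof (pow2_ge_0 (b + d)). nra.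
Qed.

Lemma Cmod2_scale r z : Cmod2 (CscaleR r z) = r ^ 2 * Cmod2 z.
Proof. destruct z as [a b]; unfold Cmod2, CscaleR; cbn [Cre Cim]. ring. Qed.

Lemma Cmod2_mul z w : Cmod2 (Cmul z w) = Cmod2 z * Cmod2 w.
Proof. destruct z as [a b], w as [c d]; unfold Cmod2, Cmul; cbn [Cre Cim]. ring. Qed.

Lemma Cmod2_comb_le p q a b B : p ^ 2 <= B -> q ^ 2 <= B ->
  Cmod2 (Cadd (CscaleR p a) (CscaleR q b)) <= 2 * B * (Cmod2 a + Cmod2 b).
Proof.
  intros Hp Hq.
  assert (Hsq : Cmod2 (Cadd (CscaleR p a) (CscaleR q b)) <= 2 * (p ^ 2 * Cmod2 a + q ^ 2 * Cmod2 b)).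
  { destruct a as [a1 a2], b as [b1 b2]; unfold Cmod2, Cadd, CscaleR; cbn [Cre Cim].
    pose proof (pow2_ge_0 (p * a1 - q * b1)); pose proof (pow2_ge_0 (p * a2 - q * b2)). nra. }
  pose proof (Cmod2_ge0 a). pose proof (Cmod2_ge0 b). nra.
Qed.

Lemma Cmod2_over D x y : D <> 0 -> Cmod2 (mkC (x / D) (y / D)) = (x ^ 2 + y ^ 2) / D ^ 2.
Proof. intro HD. unfold Cmod2; cbn [Cre Cim]. field. exact HD. Qed.

Lemma Cre_le z : Rabs (Cre z) <= sqrt (Cmod2 z).
Proof.
  destruct z as [x y]; unfold Cmod2; cbn [Cre Cim].
  rewrite <- sqrt_Rsqr_abs. apply sqrt_le_1_alt. unfold Rsqr. nra.
Qed.

Lemma Cim_le z : Rabs (Cim z) <= sqrt (Cmod2 z).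
Proof.
  destruct z as [x y]; unfold Cmod2; cbn [Cre Cim].
  rewrite <- sqrt_Rsqr_abs. apply sqrt_le_1_alt. unfold Rsqr. nra.
Qed.

Definition Cinv (w : Cplx) : Cplx := mkC (Cre w / Cmod2 w) (- Cim w / Cmod2 w).
Definition Cdiv (z w : Cplx) : Cplx := Cmul z (Cinv w).

Lemma Cmod2_div z w : Cmod2 w <> 0 -> Cmod2 (Cdiv z w) = Cmod2 z / Cmod2 w.
Proof.
  destruct z as [a b], w as [c d]; unfold Cdiv, Cinv, Cmod2, Cmul; cbn [Cre Cim].
  intro H. field. exact H.
Qed.

Lemma Cdiv_mul z w : Cmod2 w <> 0 -> Cmul (Cdiv z w) w = z.
Proof.
  destruct z as [a b], w as [c d]; unfold Cdiv, Cinv, Cmod2, Cmul; cbn [Cre Cim].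
  intro H. f_equal; field; exact H.
Qed.

Lemma Cdiv_unique c z w : Cmod2 w <> 0 -> Cmul c w = z -> c = Cdiv z w.
Proof.
  intros H <-. destruct c as [a b], w as [c d].
  unfold Cdiv, Cinv, Cmul; unfold Cmod2 in *; cbn [Cre Cim] in *. f_equal; field; exact H.
Qed.

Lemma inH_sub lam x y : inHq lam 0 x -> inHq lam 0 y -> inHq lam 0 (seq_sub x y).
Proof.
  intros [lx Hx] [ly Hy]. rewrite Hq_terms_0 in Hx, Hy.
  destruct (series_comparison (fun k => Cmod2 (seq_sub x y k))
              (fun k => 2 * Cmod2 (x k) + 2 * Cmod2 (y k)) (2 * lx + 2 * ly)) as [l [Hl _]].
  - intro k; split; [apply Cmod2_ge0|apply Cmod2_sub].
  - apply series_plus; apply series_scal; assumption.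
  - exists l. rewrite Hq_terms_0. exact Hl.
Qed.

Lemma inH_scale lam r x : inHq lam 0 x -> inHq lam 0 (seq_scale r x).
Proof.
  intros [lx Hx]. rewrite Hq_terms_0 in Hx. exists (r ^ 2 * lx). rewrite Hq_terms_0.
  unfold seq_scale. replace (fun k => Cmod2 (CscaleR r (x k))) with (fun k => r ^ 2 * Cmod2 (x k)).
  - apply series_scal; assumption.
  - apply functional_extensionality; intro k. symmetry; apply Cmod2_scale.
Qed.

Lemma coef_le_Hnorm lam x k : inHq lam 0 x -> sqrt (Cmod2 (x k)) <= Hnorm lam 0 x.
Proof.
  intros [l Hl]. rewrite (Hnorm_eq _ _ _ _ Hl). apply sqrt_le_1_alt.
  rewrite Hq_terms_0 in Hl. apply (term_le_series (fun k => Cmod2 (x k))); [|exact Hl].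
  intro; apply Cmod2_ge0.
Qed.

Lemma Hnorm_bound lam q x (B : nat -> R) L c :
  (forall k, 0 <= Hq_terms lam q x k <= c * B k) -> infinite_sum B L ->
  inHq lam q x /\ Hnorm lam q x <= sqrt (c * L).
Proof.
  intros Hx HB.
  destruct (series_comparison (Hq_terms lam q x) (fun k => c * B k) (c * L) Hx)
    as [l [Hl Hle]]; [apply series_scal; exact HB|].
  split; [exists l; exact Hl|].
  rewrite (Hnorm_eq _ _ _ _ Hl). apply sqrt_le_1_alt; exact Hle.
Qed.

Lemma Hnorm_small lam (y : R -> Hseq) (B : nat -> R) L t (D : R -> Prop) :
  (forall s k, D s -> Cmod2 (y s k) <= B k) -> infinite_sum B L ->
  (forall k eps, 0 < eps -> exists delta, 0 < delta /\
     forall s, D s -> Rabs (s - t) < delta -> Cmod2 (y s k) < eps) ->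
  forall eps, 0 < eps -> exists delta, 0 < delta /\
     forall s, D s -> Rabs (s - t) < delta -> Hnorm lam 0 (y s) < eps.
Proof.
  intros Hy HB Hpt eps He.
  assert (Hdom : forall s k, D s -> 0 <= Cmod2 (y s k) <= B k)
    by (intros; split; [apply Cmod2_ge0|auto]).
  destruct (dominated_series_small (fun s k => Cmod2 (y s k)) B L t D Hdom HB Hpt (eps ^ 2))
    as [d [Hd Hsmall]]; [nra|].
  exists d; split; [exact Hd|]. intros s Hs Hst.
  destruct (series_comparison (fun k => Cmod2 (y s k)) B L) as [l [Hl _]];
    [intro k; apply Hdom; exact Hs|exact HB|].
  rewrite (Hnorm_eq lam 0 (y s) l) by (rewrite Hq_terms_0; exact Hl).
  rewrite <- (sqrt_pow2 eps) by lra. apply sqrt_lt_1_alt.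
  split; [exact (series_nonneg _ _ (fun k => Cmod2_ge0 _) Hl)|exact (Hsmall s Hs Hst l Hl)].
Qed.

Lemma quadratic_small (X : R -> R) C t : 0 <= C -> (forall s, X s <= C * (s - t) ^ 2) ->
  forall eps, 0 < eps -> exists delta, 0 < delta /\ forall s, Rabs (s - t) < delta -> X s < eps.
Proof.
  intros HC HX eps He. exists (sqrt (eps / (C + 1))).
  split; [apply sqrt_lt_R0; apply Rdiv_lt_0_compat; lra|].
  intros s Hs. apply Rle_lt_trans with (C * (s - t) ^ 2); [apply HX|].
  assert (Hsq : (s - t) ^ 2 < eps / (C + 1)).
  { rewrite <- Rsqr_pow2, <- (Rsqr_sqrt (eps / (C + 1))) by (left; apply Rdiv_lt_0_compat; lra).
    apply Rsqr_lt_abs_1. rewrite (Rabs_right (sqrt _)); [exact Hs|apply Rle_ge, sqrt_pos]. }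
  apply Rle_lt_trans with ((C + 1) * (s - t) ^ 2); [pose proof (pow2_ge_0 (s - t)); nra|].
  apply (Rmult_lt_compat_l (C + 1)) in Hsq; [|lra].
  replace ((C + 1) * (eps / (C + 1))) with eps in Hsq by (field; lra). exact Hsq.
Qed.

Lemma cont_H_of_modes lam T (y : R -> Hseq) (B : nat -> R) L (C : nat -> R) :
  (forall t, 0 <= t <= T -> inHq lam 0 (y t)) -> infinite_sum B L ->
  (forall s t k, Cmod2 (Csub (y s k) (y t k)) <= B k) ->
  (forall k, 0 <= C k) -> (forall s t k, Cmod2 (Csub (y s k) (y t k)) <= C k * (s - t) ^ 2) ->
  cont_Hq lam 0 T y.
Proof.
  intros Hy HB Hdom HC Hlip. split; [exact Hy|]. intros t _ eps He.
  apply (Hnorm_small lam (fun s => seq_sub (y s) (y t)) B L t (fun s => 0 <= s <= T));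
    [intros; apply Hdom|exact HB| |exact He].
  intros k ep Hep.
  destruct (quadratic_small (fun s => Cmod2 (Csub (y s k) (y t k))) (C k) t (HC k)
              (fun s => Hlip s t k) ep Hep) as [d [Hd Hsmall]].
  exists d. split; [exact Hd|]. intros s _ Hs. exact (Hsmall s Hs).
Qed.

Lemma sin2_cos2_pow x : sin x ^ 2 + cos x ^ 2 = 1.
Proof. rewrite <- !Rsqr_pow2. apply sin2_cos2. Qed.

Lemma sin_sq_le1 x : sin x ^ 2 <= 1.
Proof. pose proof (sin2_cos2_pow x). pose proof (pow2_ge_0 (cos x)). lra. Qed.

Lemma cos_sq_le1 x : cos x ^ 2 <= 1.
Proof. pose proof (sin2_cos2_pow x). pose proof (pow2_ge_0 (sin x)). lra. Qed.

Lemma abs_sin_le x : Rabs (sin x) <= Rabs x.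
Proof.
  assert (Hpos : forall y, 0 < y -> Rabs (sin y) <= Rabs y).
  { intros y Hy. pose proof (sin_lt_x y Hy). pose proof (SIN_bound y).
    rewrite (Rabs_right y) by lra.
    destruct (Rle_dec y 1).
    - assert (0 <= sin y) by (apply sin_ge_0; pose proof PI2_1; lra).
      rewrite Rabs_right; lra.
    - apply Rabs_le. lra. }
  destruct (Rtotal_order x 0) as [H|[H|H]].
  - pose proof (Hpos (- x) ltac:(lra)). rewrite sin_neg, !Rabs_Ropp in H0. exact H0.
  - subst. rewrite sin_0. lra.
  - apply Hpos; lra.
Qed.

Lemma half_angle_product_le x y w : Rabs w <= 1 -> (2 * sin ((x - y) / 2) * w) ^ 2 <= (x - y) ^ 2.
Proof.
  intro Hw. rewrite <- !Rsqr_pow2. apply Rsqr_le_abs_1.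
  pose proof (abs_sin_le ((x - y) / 2)).
  rewrite !Rabs_mult, (Rabs_right 2) by lra.
  replace (Rabs (x - y)) with (2 * Rabs ((x - y) / 2))
    by (unfold Rdiv; rewrite Rabs_mult, (Rabs_right (/ 2)) by lra; lra).
  pose proof (Rabs_pos (sin ((x - y) / 2))). pose proof (Rabs_pos w). nra.
Qed.

Lemma cos_diff_sq x y : (cos x - cos y) ^ 2 <= (x - y) ^ 2.
Proof.
  rewrite form2.
  replace (-2 * sin ((x - y) / 2) * sin ((x + y) / 2))
    with (2 * sin ((x - y) / 2) * (- sin ((x + y) / 2))) by ring.
  apply half_angle_product_le. rewrite Rabs_Ropp. apply Rabs_le. apply SIN_bound.
Qed.

Lemma sin_diff_sq x y : (sin x - sin y) ^ 2 <= (x - y) ^ 2.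
Proof.
  rewrite form4. rewrite (Rmult_comm 2 (cos _)), Rmult_assoc, Rmult_comm.
  apply half_angle_product_le. apply Rabs_le. apply COS_bound.
Qed.

Lemma cos_diff_sq_le4 x y : (cos x - cos y) ^ 2 <= 4.
Proof.
  pose proof (cos_sq_le1 x). pose proof (cos_sq_le1 y). pose proof (pow2_ge_0 (cos x + cos y)). nra.
Qed.

Lemma sin_diff_sq_le4 x y : (sin x - sin y) ^ 2 <= 4.
Proof.
  pose proof (sin_sq_le1 x). pose proof (sin_sq_le1 y). pose proof (pow2_ge_0 (sin x + sin y)). nra.
Qed.

Lemma RInt_eq_of_is f a b l : is_RInt f a b l -> RInt_eq f a b l.
Proof.
  intro H. assert (Hex : ex_RInt f a b) by (exists l; exact H).
  exists (ex_RInt_Reals_0 f a b Hex). rewrite <- RInt_Reals. apply is_RInt_unique. exact H.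
Qed.

Lemma RInt_eq_val f h a b l l' : a <= b -> RInt_eq f a b l -> is_RInt h a b l' ->
  (forall x, a < x < b -> f x = h x) -> l = l'.
Proof.
  intros Hab [pr Hpr] Hh Hfh. rewrite <- Hpr, <- RInt_Reals.
  rewrite (RInt_ext f h). { apply is_RInt_unique; exact Hh. }
  intros x Hx. rewrite Rmin_left, Rmax_right in Hx by lra. auto.
Qed.

Lemma is_RInt_antiderivative (F f : R -> R) a b l :
  (forall x, is_derive F x (f x)) -> (forall x, ex_derive f x) -> F b - F a = l ->
  is_RInt f a b l.
Proof.
  intros HF Hf <-. apply (is_RInt_derive F f a b); [intros; apply HF|].
  intros; exact (@ex_derive_continuous R_AbsRing R_NormedModule f x (Hf x)).
Qed.

Lemma RInt_correct_smooth (f : R -> R) a b : (forall x, ex_derive f x) -> is_RInt f a b (RInt f a b).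
Proof.
  intros Hf. apply (RInt_correct (V := R_CompleteNormedModule)).
  apply (@ex_RInt_continuous R_CompleteNormedModule). intros z _.
  exact (@ex_derive_continuous R_AbsRing R_NormedModule f z (Hf z)).
Qed.

Lemma is_RInt_lin4 f1 f2 f3 f4 (x1 x2 x3 x4 l1 l2 l3 l4 c d : R) :
  is_RInt f1 c d l1 -> is_RInt f2 c d l2 -> is_RInt f3 c d l3 -> is_RInt f4 c d l4 ->
  is_RInt (fun t => x1 * f1 t + x2 * f2 t + x3 * f3 t + x4 * f4 t) c d
    (x1 * l1 + x2 * l2 + x3 * l3 + x4 * l4).
Proof.
  intros H1 H2 H3 H4.
  apply (is_RInt_plus (V := R_NormedModule));
    [apply (is_RInt_plus (V := R_NormedModule));
      [apply (is_RInt_plus (V := R_NormedModule))|]|];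
    apply (is_RInt_scal (V := R_NormedModule)); assumption.
Qed.

(* Changing the integrand everywhere, stated on R so that [ring] applies. *)
Lemma is_RInt_ext_R (f h : R -> R) a b l : (forall x, f x = h x) -> is_RInt f a b l ->
  is_RInt h a b l.
Proof. intros E H. apply (is_RInt_ext (V := R_NormedModule) f); [intros; apply E|exact H]. Qed.

(** The integrals P(mu) = int_0^T e^{i om t} cos(mu t) dt and
    Q(mu) = int_0^T e^{i om t} sin(mu t) dt, which couple the data of a mode. *)

Definition prod_cc om mu t := cos (om * t) * cos (mu * t).
Definition prod_sc om mu t := sin (om * t) * cos (mu * t).
Definition prod_cs om mu t := cos (om * t) * sin (mu * t).
Definition prod_ss om mu t := sin (om * t) * sin (mu * t).

Definition Pint om T mu := mkC (RInt (prod_cc om mu) 0 T) (RInt (prod_sc om mu) 0 T).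
Definition Qint om T mu := mkC (RInt (prod_cs om mu) 0 T) (RInt (prod_ss om mu) 0 T).

Lemma is_RInt_prod_cc om T mu : is_RInt (prod_cc om mu) 0 T (Cre (Pint om T mu)).
Proof. apply RInt_correct_smooth. intro; unfold prod_cc; auto_derive; auto. Qed.
Lemma is_RInt_prod_sc om T mu : is_RInt (prod_sc om mu) 0 T (Cim (Pint om T mu)).
Proof. apply RInt_correct_smooth. intro; unfold prod_sc; auto_derive; auto. Qed.
Lemma is_RInt_prod_cs om T mu : is_RInt (prod_cs om mu) 0 T (Cre (Qint om T mu)).
Proof. apply RInt_correct_smooth. intro; unfold prod_cs; auto_derive; auto. Qed.
Lemma is_RInt_prod_ss om T mu : is_RInt (prod_ss om mu) 0 T (Cim (Qint om T mu)).
Proof. apply RInt_correct_smooth. intro; unfold prod_ss; auto_derive; auto. Qed.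

Section ClosedForms.
Variables om T mu : R.
Hypothesis Hres : mu * mu - om * om <> 0.
Let D := mu * mu - om * om.

Lemma Pint_re : Cre (Pint om T mu) =
  (mu * cos (om * T) * sin (mu * T) - om * sin (om * T) * cos (mu * T)) / D.
Proof.
  apply is_RInt_unique.
  apply (is_RInt_antiderivative
           (fun t => (mu * cos (om * t) * sin (mu * t) - om * sin (om * t) * cos (mu * t)) / D)).
  - intro x. unfold prod_cc, D. auto_derive; auto. field. auto.
  - intro x. unfold prod_cc. auto_derive; auto.
  - rewrite !Rmult_0_r, cos_0, sin_0. unfold D. field. auto.
Qed.

Lemma Pint_im : Cim (Pint om T mu) =
  (om * cos (om * T) * cos (mu * T) + mu * sin (om * T) * sin (mu * T) - om) / D.
Proof.
  apply is_RInt_unique.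
  apply (is_RInt_antiderivative
           (fun t => (om * cos (om * t) * cos (mu * t) + mu * sin (om * t) * sin (mu * t)) / D)).
  - intro x. unfold prod_sc, D. auto_derive; auto. field. auto.
  - intro x. unfold prod_sc. auto_derive; auto.
  - rewrite !Rmult_0_r, cos_0, sin_0. unfold D. field. auto.
Qed.

Lemma Qint_re : Cre (Qint om T mu) =
  (mu - mu * cos (om * T) * cos (mu * T) - om * sin (om * T) * sin (mu * T)) / D.
Proof.
  apply is_RInt_unique.
  apply (is_RInt_antiderivative
           (fun t => (- mu * cos (om * t) * cos (mu * t) - om * sin (om * t) * sin (mu * t)) / D)).
  - intro x. unfold prod_cs, D. auto_derive; auto. field. auto.
  - intro x. unfold prod_cs. auto_derive; auto.
  - rewrite !Rmult_0_r, cos_0, sin_0. unfold D. field. auto.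
Qed.

Lemma Qint_im : Cim (Qint om T mu) =
  (om * cos (om * T) * sin (mu * T) - mu * sin (om * T) * cos (mu * T)) / D.
Proof.
  apply is_RInt_unique.
  apply (is_RInt_antiderivative
           (fun t => (om * cos (om * t) * sin (mu * t) - mu * sin (om * t) * cos (mu * t)) / D)).
  - intro x. unfold prod_ss, D. auto_derive; auto. field. auto.
  - intro x. unfold prod_ss. auto_derive; auto.
  - rewrite !Rmult_0_r, cos_0, sin_0. unfold D. field. auto.
Qed.
End ClosedForms.

Lemma sin_sq_integral mu T : 0 < mu -> 0 < T ->
  exists l, 0 < l /\ is_RInt (fun t => sin (mu * t) * sin (mu * t)) 0 T l.
Proof.
  intros Hm HT. exists (T / 2 - sin (2 * mu * T) / (4 * mu)). split.
  - pose proof (sin_lt_x (2 * mu * T) ltac:(nra)).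
    apply Rlt_0_minus. apply (Rmult_lt_reg_r (4 * mu)); [lra|]. field_simplify; lra.
  - apply (is_RInt_antiderivative (fun t => t / 2 - sin (2 * mu * t) / (4 * mu))).
    + intro x. auto_derive; auto.
      replace (2 * mu * x) with (2 * (mu * x)) by ring. rewrite cos_2a_sin. field. lra.
    + intro x. auto_derive; auto.
    + rewrite Rmult_0_r, sin_0. field. lra.
Qed.

(* At resonance om = +-mu, the imaginary part of Q is +-int_0^T sin^2(mu t) dt. *)
Lemma Qint_im_resonant om T mu : 0 < mu -> 0 < T -> om * om = mu * mu ->
  Cim (Qint om T mu) <> 0.
Proof.
  intros Hm HT Hres. destruct (sin_sq_integral mu T Hm HT) as [l [Hl Hint]].
  assert (Hom : om = mu \/ om = - mu) by nra.
  unfold Qint; cbn [Cim].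
  destruct Hom as [->| ->].
  - unfold prod_ss. rewrite (is_RInt_unique _ _ _ _ Hint). lra.
  - assert (Hopp : is_RInt (prod_ss (- mu) mu) 0 T (opp l)).
    { apply (is_RInt_ext (V := R_NormedModule) (fun t => opp (sin (mu * t) * sin (mu * t)))).
      - intros x _. unfold prod_ss, opp; simpl.
        replace (- mu * x) with (- (mu * x)) by ring. rewrite sin_neg. ring.
      - apply (is_RInt_opp (V := R_NormedModule)). exact Hint. }
    rewrite (is_RInt_unique _ _ _ _ Hopp). unfold opp; simpl. lra.
Qed.

(* Away from resonance, the numerator of Q(mu) vanishes only if e^{i om T} = +-1. *)
Lemma Q_numerator_pos mu om c s cm sm :
  0 < mu -> s ^ 2 + c ^ 2 = 1 -> sm ^ 2 + cm ^ 2 = 1 -> s <> 0 -> mu * mu - om * om <> 0 ->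
  0 < (mu - mu * c * cm - om * s * sm) ^ 2 + (om * c * sm - mu * s * cm) ^ 2.
Proof.
  intros Hm E1 E2 Hs HD.
  set (Nr := mu - mu * c * cm - om * s * sm). set (Ni := om * c * sm - mu * s * cm).
  destruct (Req_dec Nr 0) as [Hr|Hr]; [destruct (Req_dec Ni 0) as [Hi|Hi]|].
  - exfalso. unfold Nr, Ni in *.
    (* (c + i s)(mu cm - i om sm) = mu, so |mu cm - i om sm| = mu: this forces sm = 0 *)
    assert (Hmu : mu = c * (mu * cm) + s * (om * sm)) by lra.
    assert (H0 : c * (om * sm) - s * (mu * cm) = 0) by lra.
    assert (E : mu ^ 2 = (mu * cm) ^ 2 + (om * sm) ^ 2).
    { replace ((mu * cm) ^ 2 + (om * sm) ^ 2)
        with ((s ^ 2 + c ^ 2) * ((mu * cm) ^ 2 + (om * sm) ^ 2)) by (rewrite E1; ring).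
      rewrite Hmu at 1.
      replace ((c * (mu * cm) + s * (om * sm)) ^ 2)
        with ((c * (mu * cm) + s * (om * sm)) ^ 2 + (c * (om * sm) - s * (mu * cm)) ^ 2)
        by (rewrite H0; ring).
      ring. }
    assert (Hsm : sm ^ 2 * (mu * mu - om * om) = 0).
    { replace (mu ^ 2) with (mu ^ 2 * (sm ^ 2 + cm ^ 2)) in E by (rewrite E2; ring). nra. }
    apply Rmult_integral in Hsm as [Hsm|Hsm]; [|contradiction].
    assert (sm = 0) by nra. subst sm.
    (* then cm = +-1 and s * cm = 0 contradicts s <> 0 *)
    assert (Hcm : cm <> 0) by nra.
    apply Hs. apply (Rmult_eq_reg_r (mu * cm)); [lra|]. apply Rmult_integral_contrapositive; lra.
  - pose proof (pow2_gt_0 Ni Hi). pose proof (pow2_ge_0 Nr). lra.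
  - pose proof (pow2_gt_0 Nr Hr). pose proof (pow2_ge_0 Ni). lra.
Qed.

Lemma Qint_nz om T mu : 0 < mu -> 0 < T -> sin (om * T) <> 0 -> 0 < Cmod2 (Qint om T mu).
Proof.
  intros Hm HT Hs.
  destruct (Req_dec (mu * mu - om * om) 0) as [HD|HD].
  - pose proof (Qint_im_resonant om T mu Hm HT ltac:(lra)) as Hi.
    unfold Cmod2. pose proof (pow2_ge_0 (Cre (Qint om T mu))). pose proof (pow2_gt_0 _ Hi). lra.
  - replace (Qint om T mu) with (mkC (Cre (Qint om T mu)) (Cim (Qint om T mu))) by reflexivity.
    rewrite (Qint_re om T mu HD), (Qint_im om T mu HD), Cmod2_over by exact HD.
    apply Rdiv_lt_0_compat; [|apply pow2_gt_0; exact HD].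
    apply Q_numerator_pos; auto using sin2_cos2_pow.
Qed.

(** Size of P(mu) and Q(mu) for large mu: |Q|^2 >= sin^2(om T) / (4 mu^2) and
    |P|^2 <= 6 / mu^2 once 4 om^2 <= mu^2 sin^2(om T). *)

Lemma Q_numerator_lower mu om c s cm sm : s ^ 2 + c ^ 2 = 1 -> sm ^ 2 + cm ^ 2 = 1 ->
  mu ^ 2 * s ^ 2 / 2 - om ^ 2 <=
  (mu - mu * c * cm - om * s * sm) ^ 2 + (om * c * sm - mu * s * cm) ^ 2.
Proof.
  intros E1 E2.
  (* write the numerator as mu w + r with |w|^2 >= s^2 and |r|^2 <= om^2 *)
  replace (mu - mu * c * cm - om * s * sm) with (mu * (1 - c * cm) + (- om * s * sm)) by ring.
  replace (om * c * sm - mu * s * cm) with (mu * (- s * cm) + om * c * sm) by ring.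
  set (w1 := 1 - c * cm). set (w2 := - s * cm). set (r1 := - om * s * sm). set (r2 := om * c * sm).
  assert (Hw : s ^ 2 <= w1 ^ 2 + w2 ^ 2).
  { replace (w1 ^ 2 + w2 ^ 2) with ((cm - c) ^ 2 + s ^ 2 + (s ^ 2 + c ^ 2 - 1) * (cm ^ 2 - 1))
      by (unfold w1, w2; ring).
    rewrite E1. pose proof (pow2_ge_0 (cm - c)). lra. }
  assert (Hr : r1 ^ 2 + r2 ^ 2 <= om ^ 2).
  { replace (r1 ^ 2 + r2 ^ 2) with (om ^ 2 * sm ^ 2 * (s ^ 2 + c ^ 2)) by (unfold r1, r2; ring).
    rewrite E1. pose proof (pow2_ge_0 cm). pose proof (pow2_ge_0 om). nra. }
  assert (Hmw : mu ^ 2 * s ^ 2 <= mu ^ 2 * (w1 ^ 2 + w2 ^ 2))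
    by (apply Rmult_le_compat_l; [apply pow2_ge_0|exact Hw]).
  assert (Hsplit : forall a b, a ^ 2 / 2 - b ^ 2 <= (a + b) ^ 2)
    by (intros a b; pose proof (pow2_ge_0 (a + 2 * b)); nra).
  pose proof (Hsplit (mu * w1) r1). pose proof (Hsplit (mu * w2) r2).
  replace ((mu * w1) ^ 2) with (mu ^ 2 * w1 ^ 2) in * by ring.
  replace ((mu * w2) ^ 2) with (mu ^ 2 * w2 ^ 2) in * by ring.
  lra.
Qed.

Lemma P_numerator_upper mu om c s cm sm : s ^ 2 + c ^ 2 = 1 -> sm ^ 2 + cm ^ 2 = 1 ->
  (mu * c * sm - om * s * cm) ^ 2 + (om * c * cm + mu * s * sm - om) ^ 2 <=
  2 * mu ^ 2 + 4 * om ^ 2.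
Proof.
  intros E1 E2.
  (* a rotation of the vector (mu sm, om cm), shifted by om *)
  replace (mu * c * sm - om * s * cm) with (c * (mu * sm) - s * (om * cm)) by ring.
  replace (om * c * cm + mu * s * sm - om) with ((s * (mu * sm) + c * (om * cm)) - om) by ring.
  assert (HAB : (mu * sm) ^ 2 + (om * cm) ^ 2 <= mu ^ 2 + om ^ 2)
    by (pose proof (pow2_ge_0 mu); pose proof (pow2_ge_0 om); nra).
  set (A := mu * sm) in *. set (B := om * cm) in *.
  assert (Hrot : (c * A - s * B) ^ 2 + (s * A + c * B) ^ 2 = A ^ 2 + B ^ 2).
  { replace (A ^ 2 + B ^ 2) with ((A ^ 2 + B ^ 2) * (s ^ 2 + c ^ 2)) by (rewrite E1; ring). ring. }
  assert (Hshift : (s * A + c * B - om) ^ 2 <= 2 * (s * A + c * B) ^ 2 + 2 * om ^ 2)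
    by (pose proof (pow2_ge_0 (s * A + c * B + om)); nra).
  pose proof (pow2_ge_0 (c * A - s * B)). lra.
Qed.

Section LargeFrequency.
Variables om T mu : R.
Hypothesis Hmu : 0 < mu.
Hypothesis Hom : om <> 0.
Hypothesis Hlarge : 4 * om ^ 2 <= mu ^ 2 * sin (om * T) ^ 2.

Lemma denominator_comparable : 3 * mu ^ 2 / 4 <= mu * mu - om * om <= mu ^ 2.
Proof.
  pose proof (sin_sq_le1 (om * T)). pose proof (pow2_gt_0 om Hom). pose proof (pow2_ge_0 mu). nra.
Qed.

Lemma Qint_large : sin (om * T) ^ 2 / (4 * mu ^ 2) <= Cmod2 (Qint om T mu).
Proof.
  pose proof denominator_comparable as Hden.
  assert (HD : mu * mu - om * om <> 0) by nra.
  replace (Qint om T mu) with (mkC (Cre (Qint om T mu)) (Cim (Qint om T mu))) by reflexivity.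
  rewrite (Qint_re om T mu HD), (Qint_im om T mu HD), Cmod2_over by exact HD.
  pose proof (Q_numerator_lower mu om (cos (om * T)) (sin (om * T)) (cos (mu * T)) (sin (mu * T))
                (sin2_cos2_pow _) (sin2_cos2_pow _)) as HN.
  set (N := (mu - mu * cos (om * T) * cos (mu * T) - om * sin (om * T) * sin (mu * T)) ^ 2 +
            (om * cos (om * T) * sin (mu * T) - mu * sin (om * T) * cos (mu * T)) ^ 2) in *.
  set (s := sin (om * T)) in *. set (D := mu * mu - om * om) in *.
  assert (HN' : mu ^ 2 * s ^ 2 / 4 <= N) by lra.
  assert (Hmu2 : 0 < mu ^ 2) by nra.
  assert (HD2 : 0 < D ^ 2 <= mu ^ 4) by nra.
  apply Rle_trans with (N / mu ^ 4).
  - apply (Rmult_le_reg_r (4 * mu ^ 4)); [nra|].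
    replace (s ^ 2 / (4 * mu ^ 2) * (4 * mu ^ 4)) with (mu ^ 2 * s ^ 2) by (field; lra).
    replace (N / mu ^ 4 * (4 * mu ^ 4)) with (4 * N) by (field; lra). lra.
  - apply Rmult_le_compat_l; [pose proof (pow2_ge_0 s); nra|].
    apply Rinv_le_contravar; lra.
Qed.

Lemma Pint_large : Cmod2 (Pint om T mu) <= 6 / mu ^ 2.
Proof.
  pose proof denominator_comparable as Hden.
  assert (HD : mu * mu - om * om <> 0) by nra.
  replace (Pint om T mu) with (mkC (Cre (Pint om T mu)) (Cim (Pint om T mu))) by reflexivity.
  rewrite (Pint_re om T mu HD), (Pint_im om T mu HD), Cmod2_over by exact HD.
  pose proof (P_numerator_upper mu om (cos (om * T)) (sin (om * T)) (cos (mu * T)) (sin (mu * T))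
                (sin2_cos2_pow _) (sin2_cos2_pow _)) as HM.
  set (M := (mu * cos (om * T) * sin (mu * T) - om * sin (om * T) * cos (mu * T)) ^ 2 +
            (om * cos (om * T) * cos (mu * T) + mu * sin (om * T) * sin (mu * T) - om) ^ 2) in *.
  set (D := mu * mu - om * om) in *.
  pose proof (sin_sq_le1 (om * T)).
  assert (HM' : M <= 3 * mu ^ 2) by nra.
  assert (Hmu2 : 0 < mu ^ 2) by nra.
  assert (HD2 : mu ^ 4 / 2 <= D ^ 2) by nra.
  apply (Rmult_le_reg_r (D ^ 2)); [nra|].
  replace (M / D ^ 2 * D ^ 2) with M by (field; lra).
  apply Rle_trans with (6 / mu ^ 2 * (mu ^ 4 / 2)).
  - replace (6 / mu ^ 2 * (mu ^ 4 / 2)) with (3 * mu ^ 2) by (field; lra). exact HM'.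
  - apply Rmult_le_compat_l; [apply Rlt_le, Rdiv_lt_0_compat; lra|exact HD2].
Qed.
End LargeFrequency.

Definition mode_gain om T mu := 2 * (/ mu ^ 2 + Cmod2 (Pint om T mu)) / Cmod2 (Qint om T mu).

Lemma coefficient_bound om T mu a g : 0 < mu -> 0 < Cmod2 (Qint om T mu) ->
  mu ^ 2 * Cmod2 (Cdiv (Csub g (Cmul a (Pint om T mu))) (Qint om T mu)) <=
  mode_gain om T mu * (mu ^ 2 * Cmod2 a + mu ^ 4 * Cmod2 g).
Proof.
  intros Hm HQ. rewrite Cmod2_div by lra. unfold mode_gain.
  pose proof (Cmod2_sub g (Cmul a (Pint om T mu))) as Hsub. rewrite Cmod2_mul in Hsub.
  pose proof (Cmod2_ge0 a). pose proof (Cmod2_ge0 g). pose proof (Cmod2_ge0 (Pint om T mu)).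
  set (P2 := Cmod2 (Pint om T mu)) in *. set (Q2 := Cmod2 (Qint om T mu)) in *.
  set (X := Cmod2 (Csub g (Cmul a (Pint om T mu)))) in *.
  set (A := Cmod2 a) in *. set (G := Cmod2 g) in *.
  apply (Rmult_le_reg_r Q2); [exact HQ|].
  replace (mu ^ 2 * (X / Q2) * Q2) with (mu ^ 2 * X) by (field; lra).
  replace (2 * (/ mu ^ 2 + P2) / Q2 * (mu ^ 2 * A + mu ^ 4 * G) * Q2) with
    (2 * A + 2 * mu ^ 2 * G + 2 * mu ^ 2 * P2 * A + 2 * mu ^ 4 * P2 * G) by (field; lra).
  assert (0 < mu ^ 2) by nra.
  assert (0 <= mu ^ 4 * P2 * G) by (apply Rmult_le_pos; [apply Rmult_le_pos|]; nra).
  nra.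
Qed.

Lemma mode_gain_large om T mu : 0 < mu -> om <> 0 -> 4 * om ^ 2 <= mu ^ 2 * sin (om * T) ^ 2 ->
  mode_gain om T mu <= 56 / sin (om * T) ^ 2.
Proof.
  intros Hm Hom Hl.
  assert (Hs : 0 < sin (om * T) ^ 2) by (pose proof (pow2_gt_0 om Hom); nra).
  pose proof (Qint_large om T mu Hm Hom Hl) as HQ. pose proof (Pint_large om T mu Hm Hom Hl) as HP.
  set (s2 := sin (om * T) ^ 2) in *. unfold mode_gain.
  set (Q2 := Cmod2 (Qint om T mu)) in *. set (P2 := Cmod2 (Pint om T mu)) in *.
  assert (Hmu2 : 0 < mu ^ 2) by nra.
  assert (HQp : 0 < s2 / (4 * mu ^ 2)) by (apply Rdiv_lt_0_compat; nra).
  apply (Rmult_le_reg_r Q2); [lra|].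
  replace (2 * (/ mu ^ 2 + P2) / Q2 * Q2) with (2 * (/ mu ^ 2 + P2)) by (field; lra).
  apply Rle_trans with (56 / s2 * (s2 / (4 * mu ^ 2))).
  - replace (56 / s2 * (s2 / (4 * mu ^ 2))) with (2 * (1 / mu ^ 2 + 6 / mu ^ 2)) by (field; lra).
    replace (/ mu ^ 2) with (1 / mu ^ 2) by (field; lra). lra.
  - apply Rmult_le_compat_l; [apply Rlt_le, Rdiv_lt_0_compat; lra|exact HQ].
Qed.

Lemma eventually_bounded (f : nat -> R) N C : (forall k, (N <= k)%nat -> f k <= C) ->
  exists M, forall k, f k <= M.
Proof.
  revert C. induction N as [|N IH]; intros C HC.
  - exists C. intro k. apply HC. lia.
  - apply (IH (Rmax C (f N))). intros k Hk.
    destruct (Nat.eq_dec k N) as [->|Hne]; [apply Rmax_r|].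
    apply Rle_trans with C; [apply HC; lia|apply Rmax_l].
Qed.

Lemma eigenvalues_lower_bound (lam : nat -> R) : (forall k, 0 < lam k) ->
  (forall M, exists N, forall k, (N <= k)%nat -> M < lam k) ->
  exists m, 0 < m /\ forall k, m <= lam k.
Proof.
  intros Hpos Hinf. destruct (Hinf 1) as [N HN].
  destruct (eventually_bounded (fun k => / lam k) N 1) as [M HM].
  { intros k Hk. specialize (HN k Hk). rewrite <- Rinv_1. apply Rinv_le_contravar; lra. }
  assert (HM0 : 0 < M) by (apply Rlt_le_trans with (/ lam 0%nat); [apply Rinv_0_lt_compat|]; auto).
  exists (/ M). split; [apply Rinv_0_lt_compat; exact HM0|].
  intro k. rewrite <- (Rinv_inv (lam k)). apply Rinv_le_contravar; [apply Rinv_0_lt_compat; auto|].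
  apply HM.
Qed.

Lemma mode_gain_uniform (lam : nat -> R) om T : (forall k, 0 < lam k) ->
  (forall M, exists N, forall k, (N <= k)%nat -> M < lam k) ->
  om <> 0 -> sin (om * T) <> 0 ->
  exists K, 0 <= K /\ forall k, mode_gain om T (sqrt (lam k)) <= K.
Proof.
  intros Hpos Hinf Hom Hs.
  assert (Hs2 : 0 < sin (om * T) ^ 2) by (apply pow2_gt_0; exact Hs).
  destruct (Hinf (4 * om ^ 2 / sin (om * T) ^ 2)) as [N HN].
  destruct (eventually_bounded (fun k => mode_gain om T (sqrt (lam k))) N (56 / sin (om * T) ^ 2))
    as [M HM].
  - intros k Hk. specialize (HN k Hk).
    assert (Hmu2 : sqrt (lam k) ^ 2 = lam k)
      by (rewrite <- Rsqr_pow2; apply Rsqr_sqrt; left; apply Hpos).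
    apply mode_gain_large; [apply sqrt_lt_R0, Hpos|exact Hom|].
    rewrite Hmu2. apply (Rmult_lt_compat_r (sin (om * T) ^ 2)) in HN; [|exact Hs2].
    replace (4 * om ^ 2 / sin (om * T) ^ 2 * sin (om * T) ^ 2) with (4 * om ^ 2) in HN
      by (field; lra). lra.
  - exists (Rmax 0 M). split; [apply Rmax_l|]. intro k. apply Rle_trans with M; [apply HM|apply Rmax_r].
Qed.

Definition mode_integrand om mu (x c : Cplx) t :=
  Cmul (Cexpi (om * t)) (Cadd (CscaleR (cos (mu * t)) x) (CscaleR (sin (mu * t)) c)).

Lemma mode_integral om T mu (x c : Cplx) :
  is_RInt (fun t => Cre (mode_integrand om mu x c t)) 0 T
    (Cre (Cadd (Cmul x (Pint om T mu)) (Cmul c (Qint om T mu)))) /\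
  is_RInt (fun t => Cim (mode_integrand om mu x c t)) 0 T
    (Cim (Cadd (Cmul x (Pint om T mu)) (Cmul c (Qint om T mu)))).
Proof.
  destruct x as [x1 x2], c as [c1 c2].
  pose proof (is_RInt_prod_cc om T mu) as Hcc. pose proof (is_RInt_prod_cs om T mu) as Hcs.
  pose proof (is_RInt_prod_sc om T mu) as Hsc. pose proof (is_RInt_prod_ss om T mu) as Hss.
  unfold Cmul, Cadd; cbn [Cre Cim]. split.
  - replace (x1 * _ - x2 * _ + _) with
      (x1 * Cre (Pint om T mu) + c1 * Cre (Qint om T mu) + - x2 * Cim (Pint om T mu)
       + - c2 * Cim (Qint om T mu)) by ring.
    apply (is_RInt_ext_R
             (fun t => x1 * prod_cc om mu t + c1 * prod_cs om mu t + - x2 * prod_sc om mu t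
                       + - c2 * prod_ss om mu t)).
    + intro t. unfold mode_integrand, Cmul, Cexpi, Cadd, CscaleR,
        prod_cc, prod_cs, prod_sc, prod_ss; cbn [Cre Cim]. ring.
    + apply is_RInt_lin4; assumption.
  - replace (x1 * _ + x2 * _ + _) with
      (x2 * Cre (Pint om T mu) + c2 * Cre (Qint om T mu) + x1 * Cim (Pint om T mu)
       + c1 * Cim (Qint om T mu)) by ring.
    apply (is_RInt_ext_R
             (fun t => x2 * prod_cc om mu t + c2 * prod_cs om mu t + x1 * prod_sc om mu t
                       + c1 * prod_ss om mu t)).
    + intro t. unfold mode_integrand, Cmul, Cexpi, Cadd, CscaleR,
        prod_cc, prod_cs, prod_sc, prod_ss; cbn [Cre Cim]. ring.
    + apply is_RInt_lin4; assumption.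
Qed.

(** The explicit solution: the k-th mode is a_k cos(mu_k t) + b_k sin(mu_k t), mu_k = sqrt lam_k,
    with b_k chosen so that the integral condition holds. *)
Section ExplicitSolution.
Variables (lam : nat -> R) (om T : R) (a g : Hseq).
Hypothesis lam_pos : forall k, 0 < lam k.
Hypothesis HQ : forall k, 0 < Cmod2 (Qint om T (sqrt (lam k))).

Definition freq k := sqrt (lam k).
Definition bcoef k := Cdiv (Csub (g k) (Cmul (a k) (Pint om T (freq k)))) (Qint om T (freq k)).
Definition Usol t k :=
  Cadd (CscaleR (cos (freq k * t)) (a k)) (CscaleR (sin (freq k * t)) (bcoef k)).
Definition Vsol t k :=
  CscaleR (freq k) (Csub (CscaleR (cos (freq k * t)) (bcoef k)) (CscaleR (sin (freq k * t)) (a k))).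

Definition data_weight k := lam k * Cmod2 (a k) + lam k ^ 2 * Cmod2 (g k).
Definition amplitude k := Cmod2 (a k) + Cmod2 (bcoef k).

Lemma freq_pos k : 0 < freq k.
Proof. unfold freq. apply sqrt_lt_R0, lam_pos. Qed.

Lemma freq_sq k : freq k ^ 2 = lam k.
Proof. unfold freq. rewrite <- Rsqr_pow2. apply Rsqr_sqrt. left; apply lam_pos. Qed.

Lemma data_weight_ge0 k : 0 <= data_weight k.
Proof.
  unfold data_weight. pose proof (lam_pos k). pose proof (Cmod2_ge0 (a k)).
  pose proof (Cmod2_ge0 (g k)). pose proof (pow2_ge_0 (lam k)).
  apply Rplus_le_le_0_compat; apply Rmult_le_pos; lra.
Qed.

Lemma amplitude_ge0 k : 0 <= amplitude k.
Proof. unfold amplitude. pose proof (Cmod2_ge0 (a k)). pose proof (Cmod2_ge0 (bcoef k)). lra. Qed.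

Lemma Usol_init : bc_init Usol a.
Proof.
  intro k. unfold Usol. rewrite Rmult_0_r, cos_0, sin_0.
  destruct (a k) as [a1 a2], (bcoef k) as [b1 b2]. unfold Cadd, CscaleR; cbn [Cre Cim]. f_equal; ring.
Qed.

Lemma Usol_wave : wave_eq lam T Usol Vsol.
Proof.
  intros s t _ _ _ k. pose proof (freq_sq k) as Hmu.
  unfold Usol, Vsol. destruct (a k) as [a1 a2], (bcoef k) as [b1 b2].
  unfold CInt_eq, Csub, CscaleR, Cadd; cbn [Cre Cim].
  split; apply RInt_eq_of_is.
  - apply (is_RInt_antiderivative (fun r => freq k * (cos (freq k * r) * b1 - sin (freq k * r) * a1))).
    + intro x. auto_derive; auto. rewrite <- Hmu. ring.
    + intro x. auto_derive; auto.
    + ring.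
  - apply (is_RInt_antiderivative (fun r => freq k * (cos (freq k * r) * b2 - sin (freq k * r) * a2))).
    + intro x. auto_derive; auto. rewrite <- Hmu. ring.
    + intro x. auto_derive; auto.
    + ring.
Qed.

Lemma bcoef_solves k :
  Cadd (Cmul (a k) (Pint om T (freq k))) (Cmul (bcoef k) (Qint om T (freq k))) = g k.
Proof.
  unfold bcoef. rewrite Cdiv_mul by (apply Rgt_not_eq, HQ).
  destruct (a k) as [a1 a2], (g k) as [g1 g2], (Pint om T (freq k)) as [p1 p2].
  unfold Cadd, Csub, Cmul; cbn [Cre Cim]. f_equal; ring.
Qed.

Lemma Usol_bc_int : bc_int om T Usol g.
Proof.
  intro k. destruct (mode_integral om T (freq k) (a k) (bcoef k)) as [Hre Him].
  rewrite bcoef_solves in Hre, Him. split; apply RInt_eq_of_is; assumption.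
Qed.

Variables (K m : R).
Hypothesis HK : forall k, mode_gain om T (sqrt (lam k)) <= K.
Hypothesis Hm0 : 0 < m.
Hypothesis Hm : forall k, m <= lam k.

Lemma amplitude_weighted k : lam k * amplitude k <= (1 + K) * data_weight k.
Proof.
  pose proof (coefficient_bound om T (freq k) (a k) (g k) (freq_pos k) (HQ k)) as Hb.
  replace (freq k ^ 4) with ((freq k ^ 2) ^ 2) in Hb by ring.
  rewrite freq_sq in Hb. fold (bcoef k) in Hb.
  pose proof (data_weight_ge0 k) as HW. pose proof (HK k) as HKk. fold (freq k) in HKk.
  assert (Hgain : mode_gain om T (freq k) * data_weight k <= K * data_weight k)
    by (apply Rmult_le_compat_r; assumption).
  unfold amplitude, data_weight in *. pose proof (lam_pos k). pose proof (Cmod2_ge0 (g k)).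
  assert (0 <= lam k ^ 2 * Cmod2 (g k)) by (apply Rmult_le_pos; [apply pow2_ge_0|lra]).
  nra.
Qed.

Lemma amplitude_le k : amplitude k <= (1 + K) / m * data_weight k.
Proof.
  pose proof (amplitude_weighted k). pose proof (Hm k). pose proof (amplitude_ge0 k).
  apply (Rmult_le_reg_l m); [exact Hm0|].
  replace (m * ((1 + K) / m * data_weight k)) with ((1 + K) * data_weight k) by (field; lra).
  nra.
Qed.

Lemma Usol_coef_bound t k : Cmod2 (Usol t k) <= 2 * amplitude k.
Proof.
  unfold Usol, amplitude. replace (2 * _) with (2 * 1 * (Cmod2 (a k) + Cmod2 (bcoef k))) by ring.
  apply Cmod2_comb_le; [apply cos_sq_le1|apply sin_sq_le1].
Qed.

Lemma Vsol_coef_bound t k : Cmod2 (Vsol t k) <= 2 * lam k * amplitude k.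
Proof.
  unfold Vsol. rewrite Cmod2_scale, freq_sq.
  assert (Csub (CscaleR (cos (freq k * t)) (bcoef k)) (CscaleR (sin (freq k * t)) (a k)) =
          Cadd (CscaleR (cos (freq k * t)) (bcoef k)) (CscaleR (- sin (freq k * t)) (a k))) as ->.
  { destruct (bcoef k) as [b1 b2], (a k) as [a1 a2].
    unfold Csub, Cadd, CscaleR; cbn [Cre Cim]. f_equal; ring. }
  pose proof (Cmod2_comb_le (cos (freq k * t)) (- sin (freq k * t)) (bcoef k) (a k) 1
                (cos_sq_le1 _) ltac:(rewrite <- Rsqr_pow2, <- Rsqr_neg, Rsqr_pow2; apply sin_sq_le1)).
  unfold amplitude. pose proof (lam_pos k). nra.
Qed.

Lemma freq_increment s t k :
  (cos (freq k * s) - cos (freq k * t)) ^ 2 <= lam k * (s - t) ^ 2 /\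
  (sin (freq k * s) - sin (freq k * t)) ^ 2 <= lam k * (s - t) ^ 2.
Proof.
  replace (lam k * (s - t) ^ 2) with ((freq k * s - freq k * t) ^ 2)
    by (rewrite <- freq_sq; ring).
  split; [apply cos_diff_sq|apply sin_diff_sq].
Qed.

Lemma Usol_increment s t k :
  Cmod2 (Csub (Usol s k) (Usol t k)) <= 8 * amplitude k /\
  Cmod2 (Csub (Usol s k) (Usol t k)) <= 2 * lam k * amplitude k * (s - t) ^ 2.
Proof.
  assert (E : Csub (Usol s k) (Usol t k) =
    Cadd (CscaleR (cos (freq k * s) - cos (freq k * t)) (a k))
         (CscaleR (sin (freq k * s) - sin (freq k * t)) (bcoef k))).
  { unfold Usol. destruct (bcoef k) as [b1 b2], (a k) as [a1 a2].
    unfold Csub, Cadd, CscaleR; cbn [Cre Cim]. f_equal; ring. }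
  rewrite E. unfold amplitude. destruct (freq_increment s t k) as [Hc Hs]. split.
  - replace (8 * _) with (2 * 4 * (Cmod2 (a k) + Cmod2 (bcoef k))) by ring.
    apply Cmod2_comb_le; [apply cos_diff_sq_le4|apply sin_diff_sq_le4].
  - replace (2 * lam k * _ * _) with (2 * (lam k * (s - t) ^ 2) * (Cmod2 (a k) + Cmod2 (bcoef k)))
      by ring.
    apply Cmod2_comb_le; assumption.
Qed.

Lemma Vsol_increment s t k :
  Cmod2 (Csub (Vsol s k) (Vsol t k)) <= 8 * lam k * amplitude k /\
  Cmod2 (Csub (Vsol s k) (Vsol t k)) <= 2 * lam k ^ 2 * amplitude k * (s - t) ^ 2.
Proof.
  set (dc := cos (freq k * s) - cos (freq k * t)). set (ds := sin (freq k * s) - sin (freq k * t)).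
  assert (E : Csub (Vsol s k) (Vsol t k) =
    Cadd (CscaleR (freq k * dc) (bcoef k)) (CscaleR (- freq k * ds) (a k))).
  { unfold Vsol, dc, ds. destruct (bcoef k) as [b1 b2], (a k) as [a1 a2].
    unfold Csub, Cadd, CscaleR; cbn [Cre Cim]. f_equal; ring. }
  assert (Ec : (freq k * dc) ^ 2 = lam k * dc ^ 2) by (rewrite <- freq_sq; ring).
  assert (Es : (- freq k * ds) ^ 2 = lam k * ds ^ 2) by (rewrite <- freq_sq; ring).
  destruct (freq_increment s t k) as [Hc Hs]. fold dc ds in Hc, Hs.
  pose proof (lam_pos k) as Hl.
  rewrite E. unfold amplitude. split.
  - replace (8 * lam k * _) with (2 * (lam k * 4) * (Cmod2 (bcoef k) + Cmod2 (a k))) by ring.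
    apply Cmod2_comb_le; rewrite ?Ec, ?Es; apply Rmult_le_compat_l; try lra;
      [apply cos_diff_sq_le4|apply sin_diff_sq_le4].
  - replace (2 * lam k ^ 2 * _ * _)
      with (2 * (lam k * (lam k * (s - t) ^ 2)) * (Cmod2 (bcoef k) + Cmod2 (a k))) by ring.
    apply Cmod2_comb_le; rewrite ?Ec, ?Es; apply Rmult_le_compat_l; lra.
Qed.

Definition quot_cos k s t := (cos (freq k * s) - cos (freq k * t)) / (s - t) + freq k * sin (freq k * t).
Definition quot_sin k s t := (sin (freq k * s) - sin (freq k * t)) / (s - t) - freq k * cos (freq k * t).

Lemma quotient_eq s t k :
  seq_sub (seq_scale (/ (s - t)) (seq_sub (Usol s) (Usol t))) (Vsol t) k =
  Cadd (CscaleR (quot_cos k s t) (a k)) (CscaleR (quot_sin k s t) (bcoef k)).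
Proof.
  unfold seq_sub, seq_scale, Usol, Vsol, quot_cos, quot_sin.
  destruct (bcoef k) as [b1 b2], (a k) as [a1 a2].
  unfold Csub, Cadd, CscaleR; cbn [Cre Cim]. unfold Rdiv. f_equal; ring.
Qed.

Lemma quot_bounds s t k : s <> t -> quot_cos k s t ^ 2 <= 4 * lam k /\ quot_sin k s t ^ 2 <= 4 * lam k.
Proof.
  intro Hst. assert (Hd : 0 < (s - t) ^ 2) by (apply pow2_gt_0; lra).
  destruct (freq_increment s t k) as [Hc Hs].
  assert (Hdiv : forall x, x ^ 2 <= lam k * (s - t) ^ 2 -> (x / (s - t)) ^ 2 <= lam k).
  { intros x Hx. unfold Rdiv. rewrite Rpow_mult_distr, pow_inv.
    apply (Rmult_le_reg_r ((s - t) ^ 2)); [exact Hd|].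
    rewrite Rmult_assoc, Rinv_l by lra. lra. }
  apply Hdiv in Hc. apply Hdiv in Hs.
  assert (Hsn : (freq k * sin (freq k * t)) ^ 2 <= lam k).
  { rewrite Rpow_mult_distr, freq_sq.
    pose proof (sin_sq_le1 (freq k * t)). pose proof (lam_pos k). nra. }
  assert (Hcs : (freq k * cos (freq k * t)) ^ 2 <= lam k).
  { rewrite Rpow_mult_distr, freq_sq.
    pose proof (cos_sq_le1 (freq k * t)). pose proof (lam_pos k). nra. }
  unfold quot_cos, quot_sin.
  set (x := (cos (freq k * s) - cos (freq k * t)) / (s - t)) in *.
  set (y := (sin (freq k * s) - sin (freq k * t)) / (s - t)) in *.
  pose proof (pow2_ge_0 (x - freq k * sin (freq k * t))).
  pose proof (pow2_ge_0 (y + freq k * cos (freq k * t))).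
  split; nra.
Qed.

Lemma quot_small k t eps : 0 < eps -> exists delta, 0 < delta /\
  forall s, s <> t -> Rabs (s - t) < delta -> quot_cos k s t ^ 2 < eps /\ quot_sin k s t ^ 2 < eps.
Proof.
  intro He. set (ep := sqrt eps).
  assert (Hep : 0 < ep) by (apply sqrt_lt_R0; lra).
  assert (Hep2 : ep ^ 2 = eps) by (unfold ep; rewrite <- Rsqr_pow2; apply Rsqr_sqrt; lra).
  assert (Dcos : derivable_pt_lim (fun x => cos (freq k * x)) t (- (freq k * sin (freq k * t))))
    by (apply is_derive_Reals; auto_derive; auto; ring).
  assert (Dsin : derivable_pt_lim (fun x => sin (freq k * x)) t (freq k * cos (freq k * t)))
    by (apply is_derive_Reals; auto_derive; auto; ring).
  destruct (Dcos ep Hep) as [d1 H1]. destruct (Dsin ep Hep) as [d2 H2].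
  exists (Rmin d1 d2). split; [apply Rmin_pos; apply cond_pos|].
  intros s Hst Hd. assert (h0 : s - t <> 0) by lra.
  specialize (H1 (s - t) h0 (Rlt_le_trans _ _ _ Hd (Rmin_l _ _))).
  specialize (H2 (s - t) h0 (Rlt_le_trans _ _ _ Hd (Rmin_r _ _))).
  replace (t + (s - t)) with s in H1, H2 by ring.
  rewrite <- Hep2, <- !Rsqr_pow2. split; apply Rsqr_lt_abs_1; rewrite (Rabs_right ep) by lra.
  - unfold quot_cos. replace (_ + _) with ((cos (freq k * s) - cos (freq k * t)) / (s - t)
      - - (freq k * sin (freq k * t))) by ring. exact H1.
  - exact H2.
Qed.

Variables A G : R.
Hypothesis HA : infinite_sum (fun k => lam k * Cmod2 (a k)) A.
Hypothesis HG : infinite_sum (fun k => lam k ^ 2 * Cmod2 (g k)) G.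

Lemma data_weight_sum c : infinite_sum (fun k => c * data_weight k) (c * (A + G)).
Proof. apply series_scal, series_plus; assumption. Qed.

Lemma Usol_H0 t : inHq lam 0 (Usol t) /\ Hnorm lam 0 (Usol t) <= sqrt (2 * (1 + K) / m * (A + G)).
Proof.
  apply (Hnorm_bound lam 0 (Usol t) data_weight (A + G)); [|apply series_plus; assumption].
  intro k. rewrite Hq_terms_0. split; [apply Cmod2_ge0|].
  pose proof (Usol_coef_bound t k). pose proof (amplitude_le k).
  replace (2 * (1 + K) / m * data_weight k) with (2 * ((1 + K) / m * data_weight k))
    by (field; lra). lra.
Qed.

Lemma Usol_H1 t : inHq lam 1 (Usol t) /\ Hnorm lam 1 (Usol t) <= sqrt (2 * (1 + K) * (A + G)).
Proof.
  apply (Hnorm_bound lam 1 (Usol t) data_weight (A + G)); [|apply series_plus; assumption].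
  intro k. rewrite Hq_terms_1. pose proof (lam_pos k). pose proof (Cmod2_ge0 (Usol t k)).
  split; [nra|].
  pose proof (Usol_coef_bound t k). pose proof (amplitude_weighted k).
  assert (lam k * Cmod2 (Usol t k) <= lam k * (2 * amplitude k))
    by (apply Rmult_le_compat_l; lra). lra.
Qed.

Lemma Vsol_H0 t : inHq lam 0 (Vsol t) /\ Hnorm lam 0 (Vsol t) <= sqrt (2 * (1 + K) * (A + G)).
Proof.
  apply (Hnorm_bound lam 0 (Vsol t) data_weight (A + G)); [|apply series_plus; assumption].
  intro k. rewrite Hq_terms_0. split; [apply Cmod2_ge0|].
  pose proof (Vsol_coef_bound t k). pose proof (amplitude_weighted k). lra.
Qed.

(* u and v are continuous into H: each mode is Lipschitz and the modes are dominated. *)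
Lemma Usol_continuous : cont_Hq lam 0 T Usol.
Proof.
  apply (cont_H_of_modes lam T Usol (fun k => 8 * ((1 + K) / m) * data_weight k)
           (8 * ((1 + K) / m) * (A + G)) (fun k => 2 * lam k * amplitude k)).
  - intros t _. apply Usol_H0.
  - apply data_weight_sum.
  - intros s t k. pose proof (proj1 (Usol_increment s t k)). pose proof (amplitude_le k). lra.
  - intro k. pose proof (lam_pos k). pose proof (amplitude_ge0 k). nra.
  - intros s t k. apply Usol_increment.
Qed.

Lemma Vsol_continuous : cont_Hq lam 0 T Vsol.
Proof.
  apply (cont_H_of_modes lam T Vsol (fun k => 8 * (1 + K) * data_weight k)
           (8 * (1 + K) * (A + G)) (fun k => 2 * lam k ^ 2 * amplitude k)).
  - intros t _. apply Vsol_H0.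
  - apply data_weight_sum.
  - intros s t k. pose proof (proj1 (Vsol_increment s t k)). pose proof (amplitude_weighted k). lra.
  - intro k. pose proof (pow2_ge_0 (lam k)). pose proof (amplitude_ge0 k). nra.
  - intros s t k. apply Vsol_increment.
Qed.

(* v is the derivative of u in H: dominated convergence of the difference quotients. *)
Lemma Usol_derivative : deriv_H lam T Usol Vsol.
Proof.
  intros t _ eps He.
  destruct (Hnorm_small lam
              (fun s => seq_sub (seq_scale (/ (s - t)) (seq_sub (Usol s) (Usol t))) (Vsol t))
              (fun k => 8 * (1 + K) * data_weight k) (8 * (1 + K) * (A + G)) t
              (fun s => 0 <= s <= T /\ s <> t)) with (eps := eps) as [d [Hd Hsmall]];
    [| apply data_weight_sum | | exact He | ].
  - intros s k [_ Hst]. rewrite quotient_eq. destruct (quot_bounds s t k Hst) as [H1 H2].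
    eapply Rle_trans; [apply (Cmod2_comb_le _ _ _ _ (4 * lam k) H1 H2)|].
    pose proof (amplitude_weighted k). unfold amplitude in *. lra.
  - intros k ep Hep. pose proof (amplitude_ge0 k) as Hamp.
    set (e := ep / (2 * (amplitude k + 1))).
    assert (He' : 0 < e) by (apply Rdiv_lt_0_compat; lra).
    assert (Hep' : 2 * e * (amplitude k + 1) = ep) by (unfold e; field; lra).
    destruct (quot_small k t e He') as [d [Hd Hq]].
    exists d. split; [exact Hd|]. intros s [_ Hst] Hsd. rewrite quotient_eq.
    destruct (Hq s Hst Hsd) as [H1 H2].
    eapply Rle_lt_trans; [apply (Cmod2_comb_le _ _ _ _ _ (Rlt_le _ _ H1) (Rlt_le _ _ H2))|].
    fold (amplitude k). nra.
  - exists d. split; [exact Hd|]. intros s Hs Hst Hsd. apply Hsmall; auto.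
Qed.

Lemma Usol_W1 : inW1inf lam T Usol Vsol.
Proof.
  split; [exact Usol_continuous|]. split; [intros t _; apply Usol_H1|].
  split; [exists (sqrt (2 * (1 + K) * (A + G))); intros t _; apply Usol_H1|].
  split; [exact Usol_derivative|exact Vsol_continuous].
Qed.

Lemma explicit_solution : is_solution lam T om a g Usol Vsol.
Proof. split; [exact Usol_W1|split; [exact Usol_wave|split; [exact Usol_init|exact Usol_bc_int]]]. Qed.
End ExplicitSolution.

(** Uniqueness for the scalar equation x' = y, y' = -lam x on [0, T], in the weak form
    available for the coefficients of a solution. *)

(* Clamping to [0, T] turns continuity within [0, T] into continuity on R. *)
Definition clamp (T r : R) := Rmax 0 (Rmin T r).

Lemma clamp_id T t : 0 <= t <= T -> clamp T t = t.
Proof. intros [H1 H2]. unfold clamp. rewrite Rmin_right, Rmax_right; lra. Qed.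

Lemma clamp_in T r : 0 <= T -> 0 <= clamp T r <= T.
Proof. intro H. unfold clamp, Rmax, Rmin. repeat destruct Rle_dec; lra. Qed.

Lemma clamp_lip T r t : 0 <= T -> Rabs (clamp T r - clamp T t) <= Rabs (r - t).
Proof. intro H. unfold clamp, Rmax, Rmin. repeat destruct Rle_dec; split_Rabs; lra. Qed.

Definition cont_within (T : R) (h : R -> R) t := forall eps, 0 < eps -> exists delta, 0 < delta /\
  forall s, 0 <= s <= T -> Rabs (s - t) < delta -> Rabs (h s - h t) < eps.

Lemma cont_within_clamp T h t : 0 <= T -> 0 <= t <= T -> cont_within T h t ->
  continuity_pt (fun r => h (clamp T r)) t.
Proof.
  intros HT Ht H eps He. destruct (H eps He) as [d [Hd Hh]]. exists d. split; [exact Hd|].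
  intros r [_ Hr]. simpl in *. unfold R_dist in *. rewrite (clamp_id T t Ht).
  apply Hh; [apply clamp_in; exact HT|].
  pose proof (clamp_lip T r t HT). rewrite (clamp_id T t Ht) in H0. lra.
Qed.

Lemma cont_within_of_derive T h t : ex_derive h t -> cont_within T h t.
Proof.
  intros Hd eps He.
  pose proof (proj2 (continuity_pt_filterlim h t)
                (@ex_derive_continuous R_AbsRing R_NormedModule h t Hd)) as Hc.
  destruct (Hc eps He) as [d [Hd0 Hh]]. exists d. split; [exact Hd0|].
  intros s _ Hs. destruct (Req_dec s t) as [->|Hne]; [rewrite Rminus_diag, Rabs_R0; exact He|].
  apply (Hh s). split; [split; [exact I|auto]|exact Hs].
Qed.

Lemma cont_within_minus T h1 h2 t : cont_within T h1 t -> cont_within T h2 t ->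
  cont_within T (fun r => h1 r - h2 r) t.
Proof.
  intros H1 H2 eps He.
  destruct (H1 (eps / 2)) as [d1 [Hd1 HH1]]; [lra|]. destruct (H2 (eps / 2)) as [d2 [Hd2 HH2]]; [lra|].
  exists (Rmin d1 d2). split; [apply Rmin_pos; auto|]. intros s Hs Hst.
  specialize (HH1 s Hs (Rlt_le_trans _ _ _ Hst (Rmin_l _ _))).
  specialize (HH2 s Hs (Rlt_le_trans _ _ _ Hst (Rmin_r _ _))).
  replace (h1 s - h2 s - (h1 t - h2 t)) with ((h1 s - h1 t) - (h2 s - h2 t)) by ring.
  eapply Rle_lt_trans; [apply Rabs_triang|]. rewrite Rabs_Ropp. lra.
Qed.

Lemma is_derive_Rplus (f h : R -> R) x df dh : is_derive f x df -> is_derive h x dh ->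
  is_derive (fun r => f r + h r) x (df + dh).
Proof. exact (is_derive_plus f h x df dh). Qed.

Lemma is_derive_Rminus (f h : R -> R) x df dh : is_derive f x df -> is_derive h x dh ->
  is_derive (fun r => f r - h r) x (df - dh).
Proof. exact (is_derive_minus f h x df dh). Qed.

Lemma near_interior T t r : 0 < t < T -> Rabs (r - t) < Rmin t (T - t) -> 0 <= r <= T.
Proof.
  intros Ht Hr. pose proof (Rlt_le_trans _ _ _ Hr (Rmin_l _ _)) as H1.
  pose proof (Rlt_le_trans _ _ _ Hr (Rmin_r _ _)) as H2.
  apply Rabs_def2 in H1; apply Rabs_def2 in H2. lra.
Qed.

Section ScalarODE.
Variables (lm mu T : R) (x y : R -> R).
Hypothesis HT : 0 < T.
Hypothesis Hmu : 0 < mu.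
Hypothesis Hlm : mu ^ 2 = lm.
Hypothesis Hd : forall t, 0 <= t <= T -> forall eps, 0 < eps -> exists delta, 0 < delta /\
  forall s, 0 <= s <= T -> s <> t -> Rabs (s - t) < delta -> Rabs ((x s - x t) / (s - t) - y t) < eps.
Hypothesis Hc : forall t, 0 <= t <= T -> cont_within T y t.
Hypothesis Hi : forall s t, 0 <= s -> s <= t -> t <= T -> RInt_eq (fun r => - lm * x r) s t (y t - y s).

Lemma x_derive t : 0 < t < T -> is_derive x t (y t).
Proof.
  intro Ht. apply is_derive_Reals. intros eps He.
  destruct (Hd t ltac:(lra) eps He) as [d [Hd0 Hq]].
  assert (Hp : 0 < Rmin d (Rmin t (T - t))) by (repeat apply Rmin_pos; lra).
  exists (mkposreal _ Hp). intros h Hh0 Hh. simpl in Hh.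
  specialize (Hq (t + h)). replace (t + h - t) with h in Hq by ring.
  apply Hq; [|lra|exact (Rlt_le_trans _ _ _ Hh (Rmin_l _ _))].
  apply (near_interior T t); [exact Ht|]. replace (t + h - t) with h by ring.
  exact (Rlt_le_trans _ _ _ Hh (Rmin_r _ _)).
Qed.

Lemma x_cont_within t : 0 <= t <= T -> cont_within T x t.
Proof.
  intros Ht eps He. destruct (Hd t Ht 1 Rlt_0_1) as [d [Hd0 Hq]].
  set (M := Rabs (y t) + 1).
  assert (HM : 0 < M) by (unfold M; pose proof (Rabs_pos (y t)); lra).
  exists (Rmin d (eps / M)). split; [apply Rmin_pos; [exact Hd0|apply Rdiv_lt_0_compat; lra]|].
  intros s Hs Hst. destruct (Req_dec s t) as [->|Hne]; [rewrite Rminus_diag, Rabs_R0; exact He|].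
  pose proof (Rlt_le_trans _ _ _ Hst (Rmin_l _ _)) as H1.
  pose proof (Rlt_le_trans _ _ _ Hst (Rmin_r _ _)) as H2.
  assert (Hbound : Rabs ((x s - x t) / (s - t)) < M).
  { unfold M. replace ((x s - x t) / (s - t)) with (((x s - x t) / (s - t) - y t) + y t) by ring.
    eapply Rle_lt_trans; [apply Rabs_triang|]. specialize (Hq s Hs Hne H1). lra. }
  replace (x s - x t) with ((x s - x t) / (s - t) * (s - t)) by (field; lra).
  rewrite Rabs_mult. apply Rle_lt_trans with (M * Rabs (s - t)).
  - apply Rmult_le_compat_r; [apply Rabs_pos|lra].
  - apply (Rmult_lt_compat_l M) in H2; [|exact HM].
    replace (M * (eps / M)) with eps in H2 by (field; lra). exact H2.
Qed.

Lemma y_derive t : 0 < t < T -> is_derive y t (- lm * x t).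
Proof.
  intro Ht. set (F := fun r => - lm * x r).
  assert (HF : forall r, 0 <= r <= T -> RInt F 0 r = y r - y 0).
  { intros r Hr. destruct (Hi 0 r ltac:(lra) ltac:(lra) ltac:(lra)) as [pr Hpr].
    unfold F. rewrite RInt_Reals with (pr := pr). exact Hpr. }
  assert (Hdp : 0 < Rmin t (T - t)) by (apply Rmin_pos; lra).
  (* y = y 0 + int_0^. F near t, and the integral of the continuous F is differentiable *)
  assert (HI : is_derive (fun b => RInt F 0 b) t (F t)).
  { apply (is_derive_RInt (V := R_NormedModule) F (fun b => RInt F 0 b) 0 t).
    - exists (mkposreal _ Hdp). intros r Hr. apply (RInt_correct (V := R_CompleteNormedModule)).
      pose proof (near_interior T t r Ht Hr) as Hr'.
      destruct (Hi 0 r ltac:(lra) ltac:(lra) ltac:(lra)) as [pr _].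
      apply ex_RInt_Reals_1. exact pr.
    - apply (@ex_derive_continuous R_AbsRing R_NormedModule).
      exists (- lm * y t). unfold F. apply is_derive_scal. apply x_derive; exact Ht. }
  apply (is_derive_ext_loc (fun r => y 0 + RInt F 0 r)).
  - exists (mkposreal _ Hdp). intros r Hr. simpl. rewrite HF by (apply (near_interior T t); auto). ring.
  - replace (- lm * x t) with (0 + F t) by (unfold F; ring).
    apply (is_derive_plus (fun _ => y 0) (fun r => RInt F 0 r)); [|exact HI].
    apply (is_derive_const (K := R_AbsRing) (V := R_NormedModule)).
Qed.

(* The solution with the same data at 0, and the energy of the difference. *)
Definition x_model r := x 0 * cos (mu * r) + y 0 / mu * sin (mu * r).
Definition y_model r := mu * (y 0 / mu * cos (mu * r) - x 0 * sin (mu * r)).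
Definition energy r :=
  lm * (x (clamp T r) - x_model (clamp T r)) ^ 2 + (y (clamp T r) - y_model (clamp T r)) ^ 2.

Lemma x_model_derive r : is_derive x_model r (y_model r).
Proof. unfold x_model, y_model. auto_derive; auto. field. lra. Qed.

Lemma y_model_derive r : is_derive y_model r (- lm * x_model r).
Proof. unfold x_model, y_model. auto_derive; auto. rewrite <- Hlm. field. lra. Qed.

Lemma energy_derive t : 0 < t < T -> is_derive energy t 0.
Proof.
  intro Ht.
  pose proof (is_derive_Rminus _ _ _ _ _ (x_derive t Ht) (x_model_derive t)) as Hf.
  pose proof (is_derive_Rminus _ _ _ _ _ (y_derive t Ht) (y_model_derive t)) as Hg.
  pose proof (is_derive_Rplus _ _ _ _ _ (is_derive_scal _ _ lm _ (is_derive_pow _ 2 _ _ Hf))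
                (is_derive_pow _ 2 _ _ Hg)) as Hsum.
  assert (Hdp : 0 < Rmin t (T - t)) by (apply Rmin_pos; lra).
  apply (is_derive_ext_loc (fun r => lm * (x r - x_model r) ^ 2 + (y r - y_model r) ^ 2)).
  - exists (mkposreal _ Hdp). intros r Hr. unfold energy.
    rewrite (clamp_id T r) by (apply (near_interior T t); auto). reflexivity.
  - replace 0 with (lm * (INR 2 * (y t - y_model t) * (x t - x_model t) ^ Nat.pred 2) +
                    INR 2 * (- lm * x t - - lm * x_model t) * (y t - y_model t) ^ Nat.pred 2)
      by (simpl; ring).
    exact Hsum.
Qed.

Lemma energy_continuous t : 0 <= t <= T -> continuity_pt energy t.
Proof.
  intro Ht.
  assert (Hsq : forall w, continuity_pt (fun z => z ^ 2) w)
    by (intro w; apply derivable_continuous_pt, derivable_pt_pow).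
  assert (Cf : continuity_pt (fun r => x (clamp T r) - x_model (clamp T r)) t).
  { apply (cont_within_clamp T (fun r => x r - x_model r)); [lra|exact Ht|].
    apply cont_within_minus; [apply x_cont_within; exact Ht|].
    apply cont_within_of_derive. eexists; apply x_model_derive. }
  assert (Cg : continuity_pt (fun r => y (clamp T r) - y_model (clamp T r)) t).
  { apply (cont_within_clamp T (fun r => y r - y_model r)); [lra|exact Ht|].
    apply cont_within_minus; [apply Hc; exact Ht|].
    apply cont_within_of_derive. eexists; apply y_model_derive. }
  apply (continuity_pt_plus (fun r => lm * (x (clamp T r) - x_model (clamp T r)) ^ 2)
                            (fun r => (y (clamp T r) - y_model (clamp T r)) ^ 2)).
  - apply (continuity_pt_scal (fun r => (x (clamp T r) - x_model (clamp T r)) ^ 2)).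
    exact (continuity_pt_comp _ (fun z => z ^ 2) t Cf (Hsq _)).
  - exact (continuity_pt_comp _ (fun z => z ^ 2) t Cg (Hsq _)).
Qed.

(* The energy vanishes at 0 and is constant, so the solution is the model one. *)
Lemma scalar_ode_unique t : 0 <= t <= T -> x t = x_model t /\ y t = y_model t.
Proof.
  intro Ht.
  assert (E0 : energy 0 = 0).
  { unfold energy. rewrite clamp_id by lra. unfold x_model, y_model.
    rewrite Rmult_0_r, cos_0, sin_0.
    replace (y 0 - mu * (y 0 / mu * 1 - x 0 * 0)) with 0 by (field; lra). ring. }
  assert (Et : energy t = 0).
  { destruct (Req_dec t 0) as [->|Hne]; [exact E0|].
    destruct (MVT_gen energy 0 t (fun _ => 0)) as [c [_ Hmvt]].
    - intros r Hr. rewrite Rmin_left, Rmax_right in Hr by lra. apply energy_derive. lra.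
    - intros r Hr. rewrite Rmin_left, Rmax_right in Hr by lra. apply energy_continuous. lra.
    - lra. }
  unfold energy in Et. rewrite clamp_id in Et by exact Ht.
  assert (0 < lm) by (rewrite <- Hlm; apply pow2_gt_0; lra).
  pose proof (pow2_ge_0 (x t - x_model t)). pose proof (pow2_ge_0 (y t - y_model t)).
  assert (Hx : (x t - x_model t) ^ 2 = 0) by nra. assert (Hy : (y t - y_model t) ^ 2 = 0) by nra.
  rewrite <- Rsqr_pow2 in Hx, Hy. apply Rsqr_0_uniq in Hx, Hy. lra.
Qed.
End ScalarODE.

Lemma coef_component_small lam (pr : Cplx -> R) (Hle : forall z, Rabs (pr z) <= sqrt (Cmod2 z))
  (z : Hseq) k eps : inHq lam 0 z -> Hnorm lam 0 z < eps -> Rabs (pr (z k)) < eps.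
Proof.
  intros Hz Hn. eapply Rle_lt_trans; [|exact Hn].
  eapply Rle_trans; [apply Hle|apply coef_le_Hnorm; exact Hz].
Qed.

Section Characterization.
Variables (lam : nat -> R) (om T : R) (a g : Hseq) (u v : R -> Hseq).
Hypothesis lam_pos : forall k, 0 < lam k.
Hypothesis HT : 0 < T.
Hypothesis HQ : forall k, 0 < Cmod2 (Qint om T (sqrt (lam k))).
Hypothesis Hsol : is_solution lam T om a g u v.

Lemma mode_component_model (pr : Cplx -> R) (Hle : forall z, Rabs (pr z) <= sqrt (Cmod2 z))
  (Hsub : forall z w, pr (Csub z w) = pr z - pr w)
  (Hscale : forall r z, pr (CscaleR r z) = r * pr z) k
  (Hwave : forall s t, 0 <= s -> s <= t -> t <= T ->
     RInt_eq (fun r => - lam k * pr (u r k)) s t (pr (v t k) - pr (v s k))) :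
  forall t, 0 <= t <= T ->
    pr (u t k) = x_model (freq lam k) (fun r => pr (u r k)) (fun r => pr (v r k)) t /\
    pr (v t k) = y_model (freq lam k) (fun r => pr (u r k)) (fun r => pr (v r k)) t.
Proof.
  destruct Hsol as [[[Hu0 _] [_ [_ [Hder [Hv0 Hvc]]]]] _].
  apply (scalar_ode_unique (lam k) (freq lam k) T); auto using freq_pos, freq_sq.
  - intros t Ht eps He. destruct (Hder t Ht eps He) as [d [Hd Hq]].
    exists d. split; [exact Hd|]. intros s Hs Hst Hsd.
    assert (Hin : inHq lam 0 (seq_sub (seq_scale (/ (s - t)) (seq_sub (u s) (u t))) (v t)))
      by (apply inH_sub; [apply inH_scale, inH_sub|]; auto).
    pose proof (coef_component_small lam pr Hle _ k eps Hin (Hq s Hs Hst Hsd)) as H.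
    unfold seq_sub, seq_scale in H. rewrite Hsub, Hscale, Hsub in H.
    unfold Rdiv. rewrite (Rmult_comm (_ - _)). exact H.
  - intros t Ht eps He. destruct (Hvc t Ht eps He) as [d [Hd Hq]].
    exists d. split; [exact Hd|]. intros s Hs Hsd.
    assert (Hin : inHq lam 0 (seq_sub (v s) (v t))) by (apply inH_sub; auto).
    pose proof (coef_component_small lam pr Hle _ k eps Hin (Hq s Hs Hsd)) as H.
    unfold seq_sub in H. rewrite Hsub in H. exact H.
Qed.

Lemma solution_mode_form k : let c := CscaleR (/ freq lam k) (v 0 k) in
  forall r, 0 <= r <= T ->
    u r k = Cadd (CscaleR (cos (freq lam k * r)) (a k)) (CscaleR (sin (freq lam k * r)) c) /\
    v r k = CscaleR (freq lam k)
              (Csub (CscaleR (cos (freq lam k * r)) c) (CscaleR (sin (freq lam k * r)) (a k))).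
Proof.
  intros c r Hr. destruct Hsol as [_ [Hw [Hinit _]]].
  destruct (mode_component_model Cre Cre_le ltac:(reflexivity) ltac:(reflexivity) k
              (fun s t H1 H2 H3 => proj1 (Hw s t H1 H2 H3 k)) r Hr) as [E1 E2].
  destruct (mode_component_model Cim Cim_le ltac:(reflexivity) ltac:(reflexivity) k
              (fun s t H1 H2 H3 => proj2 (Hw s t H1 H2 H3 k)) r Hr) as [E3 E4].
  rewrite <- (Hinit k). unfold x_model, y_model, c in *.
  destruct (u r k) as [u1 u2], (v r k) as [v1 v2]; cbn [Cre Cim] in *.
  unfold Cadd, CscaleR, Csub; cbn [Cre Cim]. split; f_equal; unfold Rdiv in *; lra.
Qed.

(* The integral condition then forces c = b_k. *)
Lemma solution_mode_coefficient k : CscaleR (/ freq lam k) (v 0 k) = bcoef lam om T a g k.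
Proof.
  set (c := CscaleR (/ freq lam k) (v 0 k)). set (M := freq lam k).
  destruct Hsol as [_ [_ [_ Hint]]]. destruct (Hint k) as [Hr Hi].
  destruct (mode_integral om T M (a k) c) as [Ire Iim].
  assert (Hu : forall r, 0 < r < T -> Cmul (Cexpi (om * r)) (u r k) = mode_integrand om M (a k) c r)
    by (intros r Hr'; unfold mode_integrand;
        rewrite (proj1 (solution_mode_form k r ltac:(lra))); reflexivity).
  pose proof (RInt_eq_val _ _ 0 T _ _ ltac:(lra) Hr Ire (fun r Hr' => f_equal Cre (Hu r Hr'))) as G1.
  pose proof (RInt_eq_val _ _ 0 T _ _ ltac:(lra) Hi Iim (fun r Hr' => f_equal Cim (Hu r Hr'))) as G2.
  unfold bcoef. fold M. apply Cdiv_unique; [apply Rgt_not_eq, HQ|].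
  rewrite (Cplx_ext _ _ G1 G2).
  destruct (a k) as [a1 a2], c as [c1 c2], (Pint om T M) as [p1 p2], (Qint om T M) as [q1 q2].
  unfold Cmul, Cadd, Csub; cbn [Cre Cim]. f_equal; ring.
Qed.

Lemma solution_is_explicit t k : 0 <= t <= T ->
  u t k = Usol lam om T a g t k /\ v t k = Vsol lam om T a g t k.
Proof.
  intro Ht. pose proof (solution_mode_form k t Ht) as Hform. cbv zeta in Hform.
  rewrite solution_mode_coefficient in Hform. exact Hform.
Qed.
End Characterization.

Lemma sqrt_scaled_sum_le C A G : 0 <= C -> 0 <= A -> 0 <= G ->
  sqrt (C * (A + G)) <= sqrt C * (sqrt A + sqrt G).
Proof.
  intros HC HA HG. rewrite sqrt_mult by lra. apply Rmult_le_compat_l; [apply sqrt_pos|].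
  pose proof (sqrt_pos A). pose proof (sqrt_pos G).
  rewrite <- (sqrt_pow2 (sqrt A + sqrt G)) by lra. apply sqrt_le_1_alt.
  replace ((sqrt A + sqrt G) ^ 2) with (sqrt A ^ 2 + sqrt G ^ 2 + 2 * sqrt A * sqrt G) by ring.
  rewrite <- !Rsqr_pow2, !Rsqr_sqrt by lra. nra.
Qed.

Section Estimate.
Variables (lam : nat -> R) (om T : R) (a g : Hseq) (K m A G : R).
Hypothesis lam_pos : forall k, 0 < lam k.
Hypothesis HT : 0 < T.
Hypothesis HQ : forall k, 0 < Cmod2 (Qint om T (sqrt (lam k))).
Hypothesis HK0 : 0 <= K.
Hypothesis HK : forall k, mode_gain om T (sqrt (lam k)) <= K.
Hypothesis Hm0 : 0 < m.
Hypothesis Hm : forall k, m <= lam k.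
Hypothesis HA : infinite_sum (fun k => lam k * Cmod2 (a k)) A.
Hypothesis HG : infinite_sum (fun k => lam k ^ 2 * Cmod2 (g k)) G.

Lemma solution_estimate u v : is_solution lam T om a g u v ->
  forall t1 t2 t3, 0 <= t1 <= T -> 0 <= t2 <= T -> 0 <= t3 <= T ->
    Hnorm lam 0 (u t1) + Hnorm lam 1 (u t2) + Hnorm lam 0 (v t3) <=
    (sqrt (2 * (1 + K) / m) + 2 * sqrt (2 * (1 + K))) * (Hnorm lam 1 a + Hnorm lam 2 g).
Proof.
  intros Hsol t1 t2 t3 Ht1 Ht2 Ht3.
  assert (Hu : forall t, 0 <= t <= T -> u t = Usol lam om T a g t)
    by (intros t Ht; apply functional_extensionality; intro k;
        exact (proj1 (solution_is_explicit lam om T a g u v lam_pos HT HQ Hsol t k Ht))).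
  assert (Hv : v t3 = Vsol lam om T a g t3)
    by (apply functional_extensionality; intro k;
        exact (proj2 (solution_is_explicit lam om T a g u v lam_pos HT HQ Hsol t3 k Ht3))).
  rewrite (Hu t1 Ht1), (Hu t2 Ht2), Hv.
  rewrite (Hnorm_eq lam 1 a A) by (rewrite Hq_terms_1; exact HA).
  rewrite (Hnorm_eq lam 2 g G) by (rewrite Hq_terms_2; exact HG).
  assert (HA0 : 0 <= A)
    by (apply (series_nonneg _ _ (fun k => Rmult_le_pos _ _ (Rlt_le _ _ (lam_pos k)) (Cmod2_ge0 _)) HA)).
  assert (HG0 : 0 <= G)
    by (apply (series_nonneg _ _ (fun k => Rmult_le_pos _ _ (pow2_ge_0 _) (Cmod2_ge0 _)) HG)).
  destruct (Usol_H0 lam om T a g lam_pos HQ K m HK Hm0 Hm A G HA HG t1) as [_ B1].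
  destruct (Usol_H1 lam om T a g lam_pos HQ K HK A G HA HG t2) as [_ B2].
  destruct (Vsol_H0 lam om T a g lam_pos HQ K HK A G HA HG t3) as [_ B3].
  pose proof (sqrt_scaled_sum_le (2 * (1 + K) / m) A G
                ltac:(apply Rmult_le_pos; [lra|apply Rlt_le, Rinv_0_lt_compat; exact Hm0]) HA0 HG0).
  pose proof (sqrt_scaled_sum_le (2 * (1 + K)) A G ltac:(lra) HA0 HG0).
  lra.
Qed.
End Estimate.

Lemma nonresonance_sin om T : Cexpi (2 * om * T) <> Cone -> sin (om * T) <> 0.
Proof.
  intros H Hs. apply H. unfold Cexpi, Cone.
  replace (2 * om * T) with (2 * (om * T)) by ring.
  rewrite cos_2a_sin, sin_2a, Hs. f_equal; ring.
Qed.

Theorem theorem1 (lam : nat -> R)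
  (lam_pos : forall k, 0 < lam k)
  (lam_inf : forall M, exists N, forall k, (N <= k)%nat -> M < lam k)
  (T omega : R) (hT : 0 < T) (homega : omega <> 0)
  (hres : Cexpi (2 * omega * T) <> Cone) :
  exists c, 0 < c /\
    forall a g : Hseq, inHq lam 1 a -> inHq lam 2 g ->
      (exists u v, is_solution lam T omega a g u v) /\
      (forall u1 v1 u2 v2,
         is_solution lam T omega a g u1 v1 ->
         is_solution lam T omega a g u2 v2 ->
         forall t, 0 <= t <= T -> forall k, u1 t k = u2 t k) /\
      (forall u v, is_solution lam T omega a g u v ->
         forall t1 t2 t3, 0 <= t1 <= T -> 0 <= t2 <= T -> 0 <= t3 <= T ->
           Hnorm lam 0 (u t1) + Hnorm lam 1 (u t2) + Hnorm lam 0 (v t3)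
             <= c * (Hnorm lam 1 a + Hnorm lam 2 g)).
Proof.
  pose proof (nonresonance_sin omega T hres) as Hs.
  destruct (mode_gain_uniform lam omega T lam_pos lam_inf homega Hs) as [K [HK0 HK]].
  destruct (eigenvalues_lower_bound lam lam_pos lam_inf) as [m [Hm0 Hm]].
  assert (HQ : forall k, 0 < Cmod2 (Qint omega T (sqrt (lam k))))
    by (intro k; apply Qint_nz; auto; apply sqrt_lt_R0; auto).
  exists (sqrt (2 * (1 + K) / m) + 2 * sqrt (2 * (1 + K))). split.
  { pose proof (sqrt_pos (2 * (1 + K) / m)). pose proof (sqrt_lt_R0 (2 * (1 + K)) ltac:(lra)). lra. }
  intros a g [A HA] [G HG]. rewrite Hq_terms_1 in HA. rewrite Hq_terms_2 in HG.
  split; [|split].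
  - exists (Usol lam omega T a g), (Vsol lam omega T a g).
    exact (explicit_solution lam omega T a g lam_pos HQ K m HK Hm0 Hm A G HA HG).
  - intros u1 v1 u2 v2 H1 H2 t Ht k.
    rewrite (proj1 (solution_is_explicit lam omega T a g u1 v1 lam_pos hT HQ H1 t k Ht)).
    rewrite (proj1 (solution_is_explicit lam omega T a g u2 v2 lam_pos hT HQ H2 t k Ht)).
    reflexivity.
  - exact (solution_estimate lam omega T a g K m A G lam_pos hT HQ HK0 HK Hm0 Hm HA HG).
Qed.
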